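(* Let $\gamma>0$, let $\Lambda(\boldsymbol Z,\boldsymbol n)$ be a rank-$r$ lattice in canonical form with $n=\prod_{i=1}^rn_i$ points, and let $\mathcal A(\boldsymbol Z,\boldsymbol n)=\{\boldsymbol h_{\boldsymbol\xi}:\boldsymbol\xi\in\mathbb Z_{n_1}\oplus\cdots\oplus\mathbb Z_{n_r}\}$ with $\boldsymbol Z^\top\boldsymbol h_{\boldsymbol\xi}\equiv\boldsymbol\xi\pmod{\boldsymbol n}$ be a full-cardinality anti-aliasing set chosen with minimal $\ell_2$ norm: $\|\boldsymbol h_{\boldsymbol\xi}\|_2=\min\{\|\boldsymbol h'\|_2:\boldsymbol h'\in\mathbb Z^d,\ \boldsymbol Z^\top\boldsymbol h'\equiv\boldsymbol\xi\pmod{\boldsymbol n}\}$. Let $v\in E_\alpha(\mathbb T^d)$ and $g\in E_\beta(\mathbb T^d)$, $\beta\ge2$. Let $D=\frac\gamma2D_{\boldsymbol n}$, $W=\frac1\gamma W_{\boldsymbol n}$. Then: (i) If $\alpha>5/2$, there is a constant $c_1$ independent of $\boldsymbol n$ and $\boldsymbol y$ (depending only on $d,\alpha,\gamma,v$) with $\|[D,W]\boldsymbol y\|_2\le c_1\|(D+I)\boldsymbol y\|_2$ for all $\boldsymbol y\in\mathbb R^n$. (ii) If $\alpha>9/2$, there is a constant $c_2$ independent of $\boldsymbol n$ and $\boldsymbol y$ (depending only on $d,\alpha,\gamma,v$) with $\|[D,[D,W]]\boldsymbol y\|_2\le c_2\|(D+I)^2\boldsymbol y\|_2$ for all $\boldsymbol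 y\in\mathbb R^n$.
   Context: Rank-$r$ lattice in canonical form: $\boldsymbol Z=(\boldsymbol z_1,\dots,\boldsymbol z_r)\in\mathbb Z^{d\times r}$, $\boldsymbol n=(n_1,\dots,n_r)\in\mathbb N^r$, $n_{i+1}\mid n_i$, the $\boldsymbol z_i$ linearly independent over $\mathbb Q$, components of $\boldsymbol z_i$ coprime to $n_i$; points $\boldsymbol p_{\boldsymbol k}=(\sum_i\boldsymbol z_ik_i/n_i)\bmod1$, $\boldsymbol k\in\mathbb Z_{n_1}\oplus\cdots\oplus\mathbb Z_{n_r}$, all distinct. Dual lattice $\Lambda^\perp=\{\boldsymbol h:\boldsymbol Z^\top\boldsymbol h\equiv\boldsymbol0\pmod{\boldsymbol n}\}$ (componentwise); an anti-aliasing set has no two distinct elements differing by an element of $\Lambda^\perp$; full cardinality means size $n$. Lexicographic enumeration: $\boldsymbol h^{(\chi)}=\boldsymbol h_{\boldsymbol\xi}$ with $\chi=\sum_{i=1}^r\xi_i\prod_{j>i}n_j$, and $\boldsymbol p^{(\kappa)}=\boldsymbol p_{\boldsymbol k}$ with $\kappa=\sum_{i=1}^rk_i\prod_{j>i}n_j$. Then $D_{\boldsymbol n}=\mathrm{diag}((4\pi^2\|\boldsymbol h^{(\chi)}\|_2^2)_{\chi=0}^{n-1})$, $V_{\boldsymbol n}=\mathrm{diag}((v(\boldsymbol p^{(\kappa)}))_{\kappa=0}^{n-1})$, $F_{\boldsymbol n}=\bigotimes_{i=1}^rF_{n_i}$ with $F_m=\frac1{\sqrt m}(\exp(-2\pi\mathrm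 i\,k\xi/m))_{\xi,k=0}^{m-1}$ the unitary Fourier matrix, and $W_{\boldsymbol n}=F_{\boldsymbol n}V_{\boldsymbol n}F_{\boldsymbol n}^{-1}$. $[A,B]=AB-BA$. Korobov space $E_\alpha(\mathbb T^d)=\{f\in L_2:\sum_{\boldsymbol h}|\widehat f(\boldsymbol h)|^2\prod_j\max(|h_j|^{2\alpha},1)<\infty\}$. *)

From Stdlib Require Import Reals ZArith QArith List.
Open Scope R_scope.

Record Cplx := mkC { Cre : R; Cim : R }.
Definition C0 : Cplx := mkC 0 0.
Definition C1 : Cplx := mkC 1 0.
Definition RtoC (x : R) : Cplx := mkC x 0.
Definition Cadd (a b : Cplx) : Cplx := mkC (Cre a + Cre b) (Cim a + Cim b).
Definition Copp (a : Cplx) : Cplx := mkC (- Cre a) (- Cim a).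
Definition Csub (a b : Cplx) : Cplx := Cadd a (Copp b).
Definition Cmul (a b : Cplx) : Cplx :=
  mkC (Cre a * Cre b - Cim a * Cim b) (Cre a * Cim b + Cim a * Cre b).
Definition Cexpi (t : R) : Cplx := mkC (cos t) (sin t).
Definition Cnorm2 (a : Cplx) : R := Cre a ^ 2 + Cim a ^ 2.

Fixpoint Csum (f : nat -> Cplx) (n : nat) : Cplx :=
  match n with O => C0 | S m => Cadd (Csum f m) (f m) end.
Fixpoint Cprod (f : nat -> Cplx) (n : nat) : Cplx :=
  match n with O => C1 | S m => Cmul (Cprod f m) (f m) end.
Fixpoint Rsum (f : nat -> R) (n : nat) : R :=
  match n with O => 0 | S m => Rsum f m + f m end.
Fixpoint Rprod (f : nat -> R) (n : nat) : R :=
  match n with O => 1 | S m => Rprod f m * f m end.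
Fixpoint Zsum (f : nat -> Z) (n : nat) : Z :=
  match n with O => 0%Z | S m => (Zsum f m + f m)%Z end.
Fixpoint Qsum (f : nat -> Q) (n : nat) : Q :=
  match n with O => 0%Q | S m => (Qsum f m + f m)%Q end.
Fixpoint nprod_range (f : nat -> nat) (a len : nat) : nat :=
  match len with O => 1%nat | S l => (f a * nprod_range f (S a) l)%nat end.

(* Zm i j = j-th component of generating vector z_i (i < r, j < d);
   nn i = n_i (i < r).  Total number of points n = n_1 * ... * n_r. *)
Definition npoints (r : nat) (nn : nat -> nat) : nat := nprod_range nn 0 r.

(* lexicographic enumeration: chi = sum_i xi_i prod_{j>i} n_j ;
   lexdig r nn chi i = xi_i, the i-th mixed-radix digit of chi. *)
Definition lexdig (r : nat) (nn : nat -> nat) (chi : nat) (i : nat) : nat :=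
  ((chi / nprod_range nn (S i) (r - S i)) mod nn i)%nat.

Definition lattice_point (r : nat) (Zm : nat -> nat -> Z) (nn : nat -> nat)
  (k : nat -> nat) (j : nat) : R :=
  frac_part (Rsum (fun i => IZR (Zm i j) * INR (k i) / INR (nn i)) r).

Definition canonical_lattice (d r : nat) (Zm : nat -> nat -> Z) (nn : nat -> nat) : Prop :=
  (forall i, (i < r)%nat -> (1 <= nn i)%nat) /\
  (forall i, (S i < r)%nat -> Nat.divide (nn (S i)) (nn i)) /\
  (forall a : nat -> Q,
      (forall j, (j < d)%nat -> Qeq (Qsum (fun i => (a i * inject_Z (Zm i j))%Q) r) 0%Q) ->
      forall i, (i < r)%nat -> Qeq (a i) 0%Q) /\
  (forall i j, (i < r)%nat -> (j < d)%nat -> Z.gcd (Zm i j) (Z.of_nat (nn i)) = 1%Z) /\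
  (forall k k' : nat -> nat,
      (forall i, (i < r)%nat -> (k i < nn i)%nat) ->
      (forall i, (i < r)%nat -> (k' i < nn i)%nat) ->
      (forall j, (j < d)%nat -> lattice_point r Zm nn k j = lattice_point r Zm nn k' j) ->
      forall i, (i < r)%nat -> k i = k' i).

Definition dual_cong (d r : nat) (Zm : nat -> nat -> Z) (nn : nat -> nat)
  (h : nat -> Z) (xi : nat -> nat) : Prop :=
  forall i, (i < r)%nat ->
    (Z.of_nat (nn i) | Zsum (fun j => (Zm i j * h j)%Z) d - Z.of_nat (xi i))%Z.

Definition l2normZ (d : nat) (h : nat -> Z) : R :=
  sqrt (IZR (Zsum (fun j => (h j * h j)%Z) d)).

(* hs chi = h^(chi) = h_xi where xi = lexdig chi; a full-cardinality anti-aliasing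
   set with Z^T h_xi = xi (mod n) and h_xi of minimal l2 norm in its class. *)
Definition min_norm_antialias (d r : nat) (Zm : nat -> nat -> Z) (nn : nat -> nat)
  (hs : nat -> nat -> Z) : Prop :=
  forall chi, (chi < npoints r nn)%nat ->
    dual_cong d r Zm nn (hs chi) (lexdig r nn chi) /\
    (forall h' : nat -> Z, dual_cong d r Zm nn h' (lexdig r nn chi) ->
       l2normZ d (hs chi) <= l2normZ d h').

Definition Mat := nat -> nat -> Cplx.
Definition Mmul (n : nat) (A B : Mat) : Mat :=
  fun i j => Csum (fun k => Cmul (A i k) (B k j)) n.
Definition Madd (A B : Mat) : Mat := fun i j => Cadd (A i j) (B i j).
Definition Msub (A B : Mat) : Mat := fun i j => Csub (A i j) (B i j).
Definition Mscale (a : R) (A : Mat) : Mat := fun i j => Cmul (RtoC a) (A i j).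
Definition Mid : Mat := fun i j => if Nat.eqb i j then C1 else C0.
Definition Mdiag (f : nat -> Cplx) : Mat := fun i j => if Nat.eqb i j then f i else C0.
Definition Mcomm (n : nat) (A B : Mat) : Mat := Msub (Mmul n A B) (Mmul n B A).
Definition Mvec (n : nat) (A : Mat) (y : nat -> Cplx) : nat -> Cplx :=
  fun i => Csum (fun k => Cmul (A i k) (y k)) n.
Definition vnorm (n : nat) (x : nat -> Cplx) : R := sqrt (Rsum (fun i => Cnorm2 (x i)) n).

Definition Dn (d : nat) (hs : nat -> nat -> Z) : Mat :=
  Mdiag (fun chi => RtoC (4 * PI ^ 2 * (l2normZ d (hs chi)) ^ 2)).

(* F_n = kron_i F_{n_i} in lexicographic order:
   entry (chi,kappa) = prod_i (1/sqrt n_i) exp(-2 pi i xi_i k_i / n_i) *)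
Definition Fn (r : nat) (nn : nat -> nat) : Mat :=
  fun chi kappa =>
    Cprod (fun i => Cmul (RtoC (/ sqrt (INR (nn i))))
       (Cexpi (- (2 * PI * INR (lexdig r nn chi i) * INR (lexdig r nn kappa i)) / INR (nn i)))) r.
(* F_n^{-1} = kron_i F_{n_i}^{-1}, F_m^{-1} = conjugate transpose of the unitary F_m *)
Definition Fninv (r : nat) (nn : nat -> nat) : Mat :=
  fun kappa chi =>
    Cprod (fun i => Cmul (RtoC (/ sqrt (INR (nn i))))
       (Cexpi ((2 * PI * INR (lexdig r nn chi i) * INR (lexdig r nn kappa i)) / INR (nn i)))) r.

Definition Vn (r : nat) (Zm : nat -> nat -> Z) (nn : nat -> nat) (v : (nat -> R) -> Cplx) : Mat :=
  Mdiag (fun kappa => v (lattice_point r Zm nn (lexdig r nn kappa))).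

Definition Wn (r : nat) (Zm : nat -> nat -> Z) (nn : nat -> nat) (v : (nat -> R) -> Cplx) : Mat :=
  let n := npoints r nn in Mmul n (Mmul n (Fn r nn) (Vn r Zm nn v)) (Fninv r nn).

Definition zrange (N : nat) : list Z :=
  map (fun t => (Z.of_nat t - Z.of_nat N)%Z) (seq 0 (2 * N + 1)).
(* all h in Z^d with |h_j| <= N (components j >= d are 0) *)
Fixpoint boxlist (m N : nat) : list (nat -> Z) :=
  match m with
  | O => (fun _ => 0%Z) :: nil
  | S m' => flat_map (fun h => map (fun t => fun j => if Nat.eqb j m' then t else h j) (zrange N))
                     (boxlist m' N)
  end.
Definition CsumL {A} (l : list A) (f : A -> Cplx) : Cplx := fold_right (fun a acc => Cadd (f a) acc) C0 l.
Definition RsumL {A} (l : list A) (f : A -> R) : R := fold_right (fun a acc => f a + acc) 0 l.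

Definition korobov (d : nat) (alpha : R) (fhat : (nat -> Z) -> Cplx) : Prop :=
  exists M, forall N,
    RsumL (boxlist d N) (fun h => Cnorm2 (fhat h) *
       Rprod (fun j => Rmax (Rpower (IZR (Z.abs (h j))) (2 * alpha)) 1) d) <= M.

(* f(x) = sum_{h in Z^d} fhat(h) exp(2 pi i h.x)  (limit of the cube partial sums) *)
Definition fourier_series_at (d : nat) (fhat : (nat -> Z) -> Cplx) (x : nat -> R) (s : Cplx) : Prop :=
  let S N := CsumL (boxlist d N)
      (fun h => Cmul (fhat h) (Cexpi (2 * PI * Rsum (fun j => IZR (h j) * x j) d))) in
  Un_cv (fun N => Cre (S N)) (Cre s) /\ Un_cv (fun N => Cim (S N)) (Cim s).

From Pilot Require Import Defs.
From Stdlib Require Import Reals ZArith QArith List Lra Lia Psatz FunctionalExtensionality ClassicalEpsilon.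
Open Scope R_scope.

(* Since [F_n] diagonalises the lattice rule, [W_n] has entries
   [W(c, c') = sum of vhat h over the coset h^(c) - h^(c') + dual lattice].  As [D] is
   diagonal, the m-fold commutator [ad_D^m W] has entries [(D_c - D_c')^m W(c, c')].
   Minimality of the anti-aliasing set gives [|h^(c)|^2 <= 2 |h^(c')|^2 + 2 |h|^2] for each
   [h] in that coset, hence [|D_c - D_c'|^m <= K^m (1 + D_c')^m (1 + |h|^2)^m].  The kernel
   so obtained has row and column sums bounded by a multiple of [sum_h |vhat h| (1 + |h|^2)^m],
   which is finite for [alpha > 2m + 1/2] by AM-GM against the Korobov weight; Schur's
   test bounds [ad_D^m W] by [(D + I)^m].  Parts (i) and (ii) are [m = 1, 2]; the estimate
   is proved for truncated Fourier series and passed to the limit. *)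

Lemma Cplx_ext a b : Cre a = Cre b -> Cim a = Cim b -> a = b.
Proof. destruct a, b; simpl; intros; subst; reflexivity. Qed.

Ltac Cplx_ring := apply Cplx_ext; simpl; try ring.

Lemma Csum_ext f g n : (forall k, (k < n)%nat -> f k = g k) -> Csum f n = Csum g n.
Proof. induction n; intros H; simpl; auto. rewrite IHn, H by (try (intros; apply H); lia). auto. Qed.

Lemma Rsum_ext f g n : (forall k, (k < n)%nat -> f k = g k) -> Rsum f n = Rsum g n.
Proof. induction n; intros H; simpl; auto. rewrite IHn, H by (try (intros; apply H); lia). auto. Qed.

Lemma Cprod_ext f g n : (forall k, (k < n)%nat -> f k = g k) -> Cprod f n = Cprod g n.
Proof. induction n; intros H; simpl; auto. rewrite IHn, H by (try (intros; apply H); lia). auto. Qed.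

Lemma Rprod_ext f g n : (forall k, (k < n)%nat -> f k = g k) -> Rprod f n = Rprod g n.
Proof. induction n; intros H; simpl; auto. rewrite IHn, H by (try (intros; apply H); lia). auto. Qed.

Lemma Zsum_ext f g n : (forall k, (k < n)%nat -> f k = g k) -> Zsum f n = Zsum g n.
Proof. induction n; intros H; simpl; auto. rewrite IHn, H by (try (intros; apply H); lia). auto. Qed.

Lemma Zsum_add f g n : Zsum (fun j => (f j + g j)%Z) n = (Zsum f n + Zsum g n)%Z.
Proof. induction n; simpl; auto. rewrite IHn. ring. Qed.

Lemma IZR_Zsum f n : IZR (Zsum f n) = Rsum (fun j => IZR (f j)) n.
Proof. induction n; simpl; auto. rewrite plus_IZR, IHn. auto. Qed.

Lemma Rsum_zero n : Rsum (fun _ => 0) n = 0.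
Proof. induction n; simpl; auto. rewrite IHn. ring. Qed.

Lemma Rsum_add f g n : Rsum (fun k => f k + g k) n = Rsum f n + Rsum g n.
Proof. induction n; simpl; [ring | rewrite IHn; ring]. Qed.

Lemma Rsum_mul_l c f n : Rsum (fun k => c * f k) n = c * Rsum f n.
Proof. induction n; simpl; [ring | rewrite IHn; ring]. Qed.

Lemma Rsum_opp f n : Rsum (fun k => - f k) n = - Rsum f n.
Proof. induction n; simpl; [ring | rewrite IHn; ring]. Qed.

Lemma Rsum_swap f n m :
  Rsum (fun i => Rsum (fun j => f i j) m) n = Rsum (fun j => Rsum (fun i => f i j) n) m.
Proof.
  induction n; simpl.
  - induction m; simpl; [auto | rewrite <- IHm; ring].
  - rewrite IHn, <- Rsum_add. auto.
Qed.

Lemma Rsum_le f g n : (forall k, (k < n)%nat -> f k <= g k) -> Rsum f n <= Rsum g n.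
Proof.
  induction n; intros H; simpl; [lra |].
  apply Rplus_le_compat; [apply IHn; intros |]; apply H; lia.
Qed.

Lemma Rsum_nonneg f n : (forall k, (k < n)%nat -> 0 <= f k) -> 0 <= Rsum f n.
Proof.
  induction n; intros H; simpl; [lra |].
  apply Rplus_le_le_0_compat; [apply IHn; intros |]; apply H; lia.
Qed.

Lemma Csum_zero n : Csum (fun _ => C0) n = C0.
Proof. induction n; simpl; auto. rewrite IHn. Cplx_ring. Qed.

Lemma Csum_mul_l c f n : Csum (fun k => Cmul c (f k)) n = Cmul c (Csum f n).
Proof. induction n; simpl. Cplx_ring. rewrite IHn. Cplx_ring. Qed.

Lemma Csum_mul_r c f n : Csum (fun k => Cmul (f k) c) n = Cmul (Csum f n) c.
Proof. induction n; simpl. Cplx_ring. rewrite IHn. Cplx_ring. Qed.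

Lemma Csum_add f g n : Csum (fun k => Cadd (f k) (g k)) n = Cadd (Csum f n) (Csum g n).
Proof. induction n; simpl. Cplx_ring. rewrite IHn. Cplx_ring. Qed.

Lemma Csum_unique_nonzero f n i : (i < n)%nat ->
  (forall k, (k < n)%nat -> k <> i -> f k = C0) -> Csum f n = f i.
Proof.
  induction n; intros Hi H; [lia | simpl].
  destruct (Nat.eq_dec i n) as [-> | Hne].
  - rewrite (Csum_ext _ (fun _ => C0)), Csum_zero by (intros; apply H; lia). Cplx_ring.
  - rewrite IHn, (H n) by (try lia; intros; apply H; lia). Cplx_ring.
Qed.

Lemma Csum_add_range g x y :
  Csum g (x + y) = Cadd (Csum g x) (Csum (fun k => g (x + k)%nat) y).
Proof.
  induction y; simpl.
  - rewrite Nat.add_0_r. Cplx_ring.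
  - rewrite Nat.add_succ_r. simpl. rewrite IHy. Cplx_ring.
Qed.

Lemma Csum_mul_range g A B :
  Csum g (A * B) = Csum (fun k0 => Csum (fun k' => g (k0 * B + k')%nat) B) A.
Proof. induction A; simpl; auto. rewrite Nat.add_comm, Csum_add_range, IHA. auto. Qed.

Lemma Cprod_succ_l g l : Cprod g (S l) = Cmul (g 0%nat) (Cprod (fun i => g (S i)) l).
Proof.
  induction l; [simpl; Cplx_ring |].
  change (Cprod g (S (S l))) with (Cmul (Cprod g (S l)) (g (S l))).
  rewrite IHl. simpl. Cplx_ring.
Qed.

Lemma Cprod_mul f g r : Cmul (Cprod f r) (Cprod g r) = Cprod (fun i => Cmul (f i) (g i)) r.
Proof. induction r; simpl. Cplx_ring. rewrite <- IHr. Cplx_ring. Qed.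

Lemma Rprod_succ_l g l : Rprod g (S l) = g 0%nat * Rprod (fun i => g (S i)) l.
Proof.
  induction l; [simpl; ring |].
  change (Rprod g (S (S l))) with (Rprod g (S l) * g (S l)). rewrite IHl. simpl. ring.
Qed.

Lemma Rprod_mul f g r : Rprod (fun i => f i * g i) r = Rprod f r * Rprod g r.
Proof. induction r; simpl. ring. rewrite IHr. ring. Qed.

Lemma Rprod_pow f d k : Rprod (fun j => f j ^ k) d = Rprod f d ^ k.
Proof. induction d; simpl. rewrite pow1; auto. rewrite IHd, Rpow_mult_distr. auto. Qed.

Lemma Rprod_pos f d : (forall j, (j < d)%nat -> 0 < f j) -> 0 < Rprod f d.
Proof.
  induction d; intros H; simpl; [lra |].
  apply Rmult_lt_0_compat; [apply IHd; intros |]; apply H; lia.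
Qed.

Lemma Rprod_inv f r : (forall i, (i < r)%nat -> f i <> 0) -> Rprod (fun i => / f i) r = / Rprod f r.
Proof.
  induction r; intros H; simpl. field.
  assert (Rprod f r <> 0).
  { clear IHr. induction r; simpl; [lra |].
    apply Rmult_integral_contrapositive_currified; [apply IHr; intros |]; apply H; lia. }
  assert (f r <> 0) by (apply H; lia).
  rewrite IHr by (intros; apply H; lia). field. auto.
Qed.

Lemma sum_le_prod_succ x d : (forall j, (j < d)%nat -> 0 <= x j) ->
  1 + Rsum x d <= Rprod (fun j => 1 + x j) d.
Proof.
  induction d; intros H; simpl; [lra |].
  assert (IH := IHd ltac:(intros; apply H; lia)). assert (Hd := H d ltac:(lia)).
  assert (0 <= Rsum x d) by (apply Rsum_nonneg; intros; apply H; lia).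
  nra.
Qed.

Lemma Mmul_diag_l n e X i j : (i < n)%nat -> Mmul n (Mdiag e) X i j = Cmul (e i) (X i j).
Proof.
  intros Hi. unfold Mmul, Mdiag. rewrite (Csum_unique_nonzero _ n i), Nat.eqb_refl; auto.
  intros k Hk Hne. destruct (Nat.eqb_spec i k); [lia | Cplx_ring].
Qed.

Lemma Mmul_diag_r n e X i j : (j < n)%nat -> Mmul n X (Mdiag e) i j = Cmul (X i j) (e j).
Proof.
  intros Hj. unfold Mmul, Mdiag. rewrite (Csum_unique_nonzero _ n j), Nat.eqb_refl; auto.
  intros k Hk Hne. destruct (Nat.eqb_spec k j); [lia | Cplx_ring].
Qed.

Lemma Mmul_diag_diag n e f i j : (i < n)%nat ->
  Mmul n (Mdiag e) (Mdiag f) i j = Mdiag (fun k => Cmul (e k) (f k)) i j.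
Proof.
  intros. rewrite Mmul_diag_l by auto. unfold Mdiag.
  destruct (Nat.eqb_spec i j); subst; auto. Cplx_ring.
Qed.

Lemma Mvec_diag n e y i : (i < n)%nat -> Mvec n (Mdiag e) y i = Cmul (e i) (y i).
Proof.
  intros Hi. unfold Mvec, Mdiag. rewrite (Csum_unique_nonzero _ n i), Nat.eqb_refl; auto.
  intros k Hk Hne. destruct (Nat.eqb_spec i k); [lia | Cplx_ring].
Qed.

Lemma Mscale_diag c e : Mscale c (Mdiag e) = Mdiag (fun i => Cmul (RtoC c) (e i)).
Proof.
  unfold Mscale, Mdiag. extensionality i. extensionality j.
  destruct (Nat.eqb i j); auto. Cplx_ring.
Qed.

Lemma Madd_diag_id e : Madd (Mdiag e) Mid = Mdiag (fun i => Cadd (e i) Defs.C1).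
Proof.
  unfold Madd, Mdiag, Mid. extensionality i. extensionality j.
  destruct (Nat.eqb i j); auto. Cplx_ring.
Qed.

Definition Mad (n : nat) (A : Mat) (m : nat) (X : Mat) : Mat := Nat.iter m (Mcomm n A) X.

Lemma Mad_diag n a m X i j : (i < n)%nat -> (j < n)%nat ->
  Mad n (Mdiag (fun k => RtoC (a k))) m X i j = Cmul (RtoC ((a i - a j) ^ m)) (X i j).
Proof.
  intros Hi Hj. induction m as [| m IH]; [Cplx_ring |].
  change (Mad n ?D (S m) X) with (Mcomm n D (Mad n D m X)).
  unfold Mcomm at 1, Msub. rewrite Mmul_diag_l, Mmul_diag_r, IH by auto. Cplx_ring.
Qed.

Lemma vnorm_ext n x x' : (forall c, (c < n)%nat -> x c = x' c) -> vnorm n x = vnorm n x'.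
Proof. intros H. unfold vnorm. f_equal. apply Rsum_ext. intros; rewrite H; auto. Qed.

(** * Mixed-radix digits *)

Section MixedRadix.
Variable nn : nat -> nat.
Notation P := (nprod_range nn).

Lemma nprod_range_add a x y : P a (x + y) = (P a x * P (a + x) y)%nat.
Proof.
  revert a; induction x; intros a; simpl.
  - rewrite !Nat.add_0_r; lia.
  - rewrite IHx. replace (S a + x)%nat with (a + S x)%nat by lia. lia.
Qed.

Lemma nprod_range_pos a len : (forall i, (i < a + len)%nat -> (1 <= nn i)%nat) -> (0 < P a len)%nat.
Proof.
  revert a; induction len; intros a H; simpl; [lia |].
  assert (1 <= nn a)%nat by (apply H; lia).
  assert (0 < P (S a) len)%nat by (apply IHlen; intros; apply H; lia). nia.
Qed.

Lemma INR_nprod_range a len : INR (P a len) = Rprod (fun i => INR (nn (a + i)%nat)) len.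
Proof.
  revert a; induction len; intros a; [simpl; auto |].
  change (P a (S len)) with (nn a * P (S a) len)%nat.
  rewrite mult_INR, IHlen, Rprod_succ_l, Nat.add_0_r. f_equal.
  apply Rprod_ext. intros; do 2 f_equal; lia.
Qed.

(* [digit a len k i] is the [i]-th digit of [k] in the radix [nn a, ..., nn (a+len-1)],
   most significant first; [lexdig r nn] is [digit 0 r]. *)
Definition digit a len k i := ((k / P (a + S i) (len - S i)) mod nn (a + i))%nat.

Lemma digit_lt a len k i : (1 <= nn (a + i))%nat -> (digit a len k i < nn (a + i))%nat.
Proof. intros. unfold digit. apply Nat.mod_upper_bound. lia. Qed.

Lemma digit_first a l k0 k' : (k0 < nn a)%nat -> (k' < P (S a) l)%nat ->
  digit a (S l) (k0 * P (S a) l + k') 0 = k0.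
Proof.
  intros H1 H2. unfold digit.
  replace (a + 1)%nat with (S a) by lia. replace (S l - 1)%nat with l by lia.
  rewrite Nat.div_add_l, (Nat.div_small k'), Nat.add_0_r, Nat.add_0_r by lia.
  apply Nat.mod_small. lia.
Qed.

Lemma digit_succ a l k0 k' i : (forall j, (j < a + S l)%nat -> (1 <= nn j)%nat) -> (i < l)%nat ->
  digit a (S l) (k0 * P (S a) l + k') (S i) = digit (S a) l k' i.
Proof.
  intros Hp Hi. unfold digit.
  replace (a + S (S i))%nat with (S a + S i)%nat by lia.
  replace (S l - S (S i))%nat with (l - S i)%nat by lia.
  replace (a + S i)%nat with (S a + i)%nat by lia.
  set (Q := P (S a + S i) (l - S i)).
  assert (HP : P (S a) l = (P (S a) i * nn (S a + i) * Q)%nat).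
  { replace l with (S i + (l - S i))%nat at 1 by lia. rewrite nprod_range_add.
    replace (S i) with (i + 1)%nat at 1 by lia. rewrite nprod_range_add. simpl.
    replace (S (a + i)) with (S a + i)%nat by lia.
    unfold Q. replace (S (a + S i)) with (S a + S i)%nat by lia. lia. }
  assert (HQ : (0 < Q)%nat) by (apply nprod_range_pos; intros; apply Hp; lia).
  rewrite HP.
  replace (k0 * (P (S a) i * nn (S a + i) * Q) + k')%nat
    with (k0 * P (S a) i * nn (S a + i) * Q + k')%nat by lia.
  rewrite Nat.div_add_l by lia. rewrite Nat.add_comm. apply Nat.Div0.mod_add.
Qed.

Lemma Csum_digits_prod f a len : (forall i, (i < a + len)%nat -> (1 <= nn i)%nat) ->
  Csum (fun k => Cprod (fun i => f (a + i)%nat (digit a len k i)) len) (P a len)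
  = Cprod (fun i => Csum (f (a + i)%nat) (nn (a + i)%nat)) len.
Proof.
  revert a; induction len; intros a Hp; [simpl; Cplx_ring |].
  change (P a (S len)) with (nn a * P (S a) len)%nat.
  rewrite Csum_mul_range, Cprod_succ_l, Nat.add_0_r.
  transitivity (Cmul (Csum (f a) (nn a)) (Csum (fun k =>
    Cprod (fun i => f (S a + i)%nat (digit (S a) len k i)) len) (P (S a) len))).
  2:{ rewrite IHlen by (intros; apply Hp; lia). f_equal.
      apply Cprod_ext. intros; do 2 f_equal; lia. }
  rewrite <- Csum_mul_r. apply Csum_ext. intros k0 Hk0. rewrite <- Csum_mul_l. apply Csum_ext. intros k' Hk'.
  rewrite Cprod_succ_l, Nat.add_0_r, digit_first by auto. f_equal.
  apply Cprod_ext. intros i Hi. rewrite digit_succ by auto. f_equal. lia.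
Qed.

Lemma digits_inj a len k1 k2 : (forall i, (i < a + len)%nat -> (1 <= nn i)%nat) ->
  (k1 < P a len)%nat -> (k2 < P a len)%nat ->
  (forall i, (i < len)%nat -> digit a len k1 i = digit a len k2 i) -> k1 = k2.
Proof.
  revert a k1 k2; induction len; intros a k1 k2 Hp H1 H2 Hd; [simpl in *; lia |].
  change (P a (S len)) with (nn a * P (S a) len)%nat in *.
  assert (HQ : (0 < P (S a) len)%nat) by (apply nprod_range_pos; intros; apply Hp; lia).
  set (Q := P (S a) len) in *.
  assert (E1 : k1 = (k1 / Q * Q + k1 mod Q)%nat) by (rewrite (Nat.div_mod k1 Q) at 1; lia).
  assert (E2 : k2 = (k2 / Q * Q + k2 mod Q)%nat) by (rewrite (Nat.div_mod k2 Q) at 1; lia).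
  assert (B1 : (k1 / Q < nn a)%nat) by (apply Nat.Div0.div_lt_upper_bound; lia).
  assert (B2 : (k2 / Q < nn a)%nat) by (apply Nat.Div0.div_lt_upper_bound; lia).
  assert (R1 : (k1 mod Q < Q)%nat) by (apply Nat.mod_upper_bound; lia).
  assert (R2 : (k2 mod Q < Q)%nat) by (apply Nat.mod_upper_bound; lia).
  assert (D0 := Hd 0%nat ltac:(lia)). rewrite E1, E2 in D0. unfold Q in D0.
  rewrite !digit_first in D0 by auto.
  assert (DS : k1 mod Q = k2 mod Q).
  { apply (IHlen (S a)); auto; [intros; apply Hp; lia |]. intros i Hi.
    assert (Hi' := Hd (S i) ltac:(lia)). rewrite E1, E2 in Hi'. unfold Q in Hi'.
    rewrite !digit_succ in Hi' by auto. exact Hi'. }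
  rewrite E1, E2. unfold Q in *. rewrite D0, DS. auto.
Qed.
End MixedRadix.

(** * Roots of unity *)

Lemma Cexpi_add a b : Cexpi (a + b) = Cmul (Cexpi a) (Cexpi b).
Proof. unfold Cexpi; Cplx_ring; [rewrite cos_plus | rewrite sin_plus]; ring. Qed.

Lemma Cexpi_0 : Cexpi 0 = Defs.C1.
Proof. unfold Cexpi. rewrite cos_0, sin_0. reflexivity. Qed.

Lemma Cexpi_Rsum th r : Cexpi (Rsum th r) = Cprod (fun i => Cexpi (th i)) r.
Proof. induction r; simpl; [apply Cexpi_0 | rewrite Cexpi_add, IHr; auto]. Qed.

Lemma Cexpi_add_2PI_INR x k : Cexpi (x + 2 * PI * INR k) = Cexpi x.
Proof.
  unfold Cexpi. replace (x + 2 * PI * INR k) with (x + 2 * INR k * PI) by ring.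
  rewrite cos_period, sin_period. auto.
Qed.

Lemma Cexpi_add_2PI_IZR x z : Cexpi (x + 2 * PI * IZR z) = Cexpi x.
Proof.
  destruct z as [| p | p].
  - rewrite Rmult_0_r, Rplus_0_r; auto.
  - replace (IZR (Z.pos p)) with (INR (Pos.to_nat p))
      by (rewrite INR_IZR_INZ, positive_nat_Z; reflexivity).
    apply Cexpi_add_2PI_INR.
  - replace (IZR (Z.neg p)) with (- INR (Pos.to_nat p))
      by (rewrite INR_IZR_INZ, positive_nat_Z, <- Ropp_Ropp_IZR; reflexivity).
    rewrite <- (Cexpi_add_2PI_INR _ (Pos.to_nat p)). f_equal. ring.
Qed.

Lemma Cexpi_2PI_IZR z : Cexpi (2 * PI * IZR z) = Defs.C1.
Proof. rewrite <- (Rplus_0_l (2 * PI * IZR z)), Cexpi_add_2PI_IZR. apply Cexpi_0. Qed.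

Lemma Cexpi_eq_1 th : Cexpi th = Defs.C1 -> exists z, th = 2 * PI * IZR z.
Proof.
  intros H. assert (Hc : cos th = 1) by exact (f_equal Cre H).
  assert (Hs : sin (th / 2) = 0).
  { assert (E := cos_2a_sin (th / 2)). replace (2 * (th / 2)) with th in E by field.
    apply Rsqr_0_uniq. unfold Rsqr. lra. }
  destruct (sin_eq_0_0 _ Hs) as [k Hk]. exists k. lra.
Qed.

Lemma Cmul_fixed_eq_0 s z : Cmul s z = s -> z <> Defs.C1 -> s = C0.
Proof.
  destruct s as [x y], z as [c t]. unfold Cmul. simpl. intros E Hz. injection E as E1 E2.
  assert (Hpos : 0 < (c - 1) ^ 2 + t ^ 2).
  { rewrite <- !Rsqr_pow2.
    destruct (Req_dec t 0) as [-> | Ht].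
    - destruct (Req_dec c 1) as [-> | Hc]; [exfalso; apply Hz; reflexivity |].
      assert (0 < (c - 1)²) by (apply Rsqr_pos_lt; lra). rewrite Rsqr_0. lra.
    - assert (0 < t²) by (apply Rsqr_pos_lt; auto). assert (0 <= (c - 1)²) by apply Rle_0_sqr. lra. }
  assert (Ex : x * ((c - 1) ^ 2 + t ^ 2) = 0).
  { transitivity ((c - 1) * (x * c - y * t - x) + t * (x * t + y * c - y)); [ring |].
    rewrite E1, E2. ring. }
  assert (Ey : y * ((c - 1) ^ 2 + t ^ 2) = 0).
  { transitivity (- t * (x * c - y * t - x) + (c - 1) * (x * t + y * c - y)); [ring |].
    rewrite E1, E2. ring. }
  apply Cplx_ext; simpl; [destruct (Rmult_integral _ _ Ex) | destruct (Rmult_integral _ _ Ey)]; lra.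
Qed.

Lemma Csum_shift g m : Cadd (Csum g m) (g m) = Cadd (g 0%nat) (Csum (fun k => g (S k)) m).
Proof.
  induction m; simpl; [Cplx_ring |].
  apply (f_equal (fun z => Cadd z (g (S m)))) in IHm. simpl in IHm.
  apply Cplx_ext; [apply (f_equal Cre) in IHm | apply (f_equal Cim) in IHm]; simpl in *; lra.
Qed.

Lemma Csum_roots_of_unity_div m a : (1 <= m)%nat -> (Z.of_nat m | a)%Z ->
  Csum (fun k => Cexpi (2 * PI * IZR a * INR k / INR m)) m = RtoC (INR m).
Proof.
  intros Hm [q ->]. rewrite (Csum_ext _ (fun _ => Defs.C1)).
  - clear Hm. induction m; [Cplx_ring |]. simpl Csum. rewrite IHm, S_INR. Cplx_ring.
  - intros k Hk. rewrite <- (Cexpi_2PI_IZR (q * Z.of_nat k)). f_equal.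
    rewrite !mult_IZR, <- !INR_IZR_INZ. field. apply not_0_INR; lia.
Qed.

Lemma Csum_roots_of_unity_ndiv m a : (1 <= m)%nat -> ~ (Z.of_nat m | a)%Z ->
  Csum (fun k => Cexpi (2 * PI * IZR a * INR k / INR m)) m = C0.
Proof.
  intros Hm Hnd. assert (Hm0 : INR m <> 0) by (apply not_0_INR; lia).
  set (th := 2 * PI * IZR a / INR m).
  rewrite (Csum_ext _ (fun k => Cexpi (INR k * th))) by (intros; unfold th; f_equal; field; auto).
  apply (Cmul_fixed_eq_0 _ (Cexpi th)).
  - (* multiplying by [Cexpi th] shifts the sum cyclically, since [Cexpi (INR m * th) = 1] *)
    rewrite <- Csum_mul_r.
    rewrite (Csum_ext _ (fun k => Cexpi (INR (S k) * th)))
      by (intros; rewrite <- Cexpi_add, S_INR; f_equal; ring).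
    assert (Hshift := Csum_shift (fun k => Cexpi (INR k * th)) m). simpl in Hshift.
    assert (Hwrap : Cexpi (INR m * th) = Cexpi (0 * th)).
    { rewrite Rmult_0_l, Cexpi_0, <- (Cexpi_2PI_IZR a). f_equal. unfold th. field. auto. }
    rewrite Hwrap in Hshift.
    apply Cplx_ext; [apply (f_equal Cre) in Hshift | apply (f_equal Cim) in Hshift];
      simpl in *; lra.
  - intros Heq. destruct (Cexpi_eq_1 _ Heq) as [z Hz]. apply Hnd. exists z.
    apply eq_IZR. rewrite mult_IZR, <- INR_IZR_INZ.
    assert (PI > 0) by apply PI_RGT_0.
    apply (Rmult_eq_reg_l (2 * PI / INR m)).
    + transitivity th; [unfold th; field; auto |]. rewrite Hz. field. auto.
    + unfold Rdiv. apply Rmult_integral_contrapositive_currified; [lra | apply Rinv_neq_0_compat; auto].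
Qed.

(** * The character sum of a rank-r lattice *)

Definition indicator (P : Prop) : R := if excluded_middle_informative P then 1 else 0.

Lemma indicator_bounds P : 0 <= indicator P <= 1.
Proof. unfold indicator. destruct (excluded_middle_informative P); lra. Qed.

Lemma Cprod_polar a t r :
  Cprod (fun i => Cmul (RtoC (a i)) (Cexpi (t i))) r = Cmul (RtoC (Rprod a r)) (Cexpi (Rsum t r)).
Proof. induction r; simpl. rewrite Cexpi_0. Cplx_ring. rewrite IHr, Cexpi_add. unfold Cexpi. Cplx_ring. Qed.

Lemma Cmul_polar a b s t :
  Cmul (Cmul (RtoC a) (Cexpi s)) (Cmul (RtoC b) (Cexpi t)) = Cmul (RtoC (a * b)) (Cexpi (s + t)).
Proof. rewrite Cexpi_add. unfold Cexpi. Cplx_ring. Qed.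

Lemma Cprod_cond (P : nat -> Prop) (a : nat -> R) f r :
  (forall i, (i < r)%nat -> f i = if excluded_middle_informative (P i) then RtoC (a i) else C0) ->
  Cprod f r = if excluded_middle_informative (forall i, (i < r)%nat -> P i) then RtoC (Rprod a r) else C0.
Proof.
  induction r; intros H; simpl.
  - destruct (excluded_middle_informative _) as [_ | n]; [Cplx_ring |].
    exfalso; apply n; intros; lia.
  - rewrite IHr, (H r) by (try (intros; apply H); lia).
    destruct (excluded_middle_informative (forall i, (i < r)%nat -> P i)) as [A | A];
    destruct (excluded_middle_informative (P r)) as [B | B];
    destruct (excluded_middle_informative (forall i, (i < S r)%nat -> P i)) as [C | C];
    try Cplx_ring; exfalso.
    + apply C. intros i Hi. destruct (Nat.eq_dec i r) as [-> |]; auto. apply A; lia.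
    + apply B, C; lia.
    + apply A. intros; apply C; lia.
    + apply A. intros; apply C; lia.
Qed.

Section LatticeCharacterSum.
Variables (d r : nat) (Zm : nat -> nat -> Z) (nn : nat -> nat).
Hypothesis nn_pos : forall i, (i < r)%nat -> (1 <= nn i)%nat.

Notation n := (npoints r nn).

Definition ZT (h : nat -> Z) (i : nat) : Z := Zsum (fun j => (Zm i j * h j)%Z) d.

Definition dual_residue (h : nat -> Z) (c c' i : nat) : Z :=
  (ZT h i - Z.of_nat (lexdig r nn c i) + Z.of_nat (lexdig r nn c' i))%Z.

(* [Z^T h = xi_c - xi_c' (mod n)]: [h] lies in the coset of the dual lattice through
   [h_c - h_c'] *)
Definition dual_coset (h : nat -> Z) (c c' : nat) : Prop :=
  forall i, (i < r)%nat -> (Z.of_nat (nn i) | dual_residue h c c' i)%Z.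

Lemma npoints_pos : (0 < n)%nat.
Proof. apply nprod_range_pos. intros; apply nn_pos; lia. Qed.

Lemma Fn_Fninv_entry c c' k :
  Cmul (Fn r nn c k) (Fninv r nn k c') =
  Cmul (RtoC (/ INR n)) (Cexpi (Rsum (fun i =>
    2 * PI * (INR (lexdig r nn c' i) - INR (lexdig r nn c i)) * INR (lexdig r nn k i) / INR (nn i)) r)).
Proof.
  unfold Fn, Fninv, npoints. rewrite Cprod_mul, INR_nprod_range, <- Rprod_inv, <- Cprod_polar.
  - apply Cprod_ext. intros i Hi.
    assert (Hn : 0 < INR (nn i)) by (apply lt_0_INR; specialize (nn_pos i Hi); lia).
    rewrite Cmul_polar, <- Rinv_mult, sqrt_sqrt by lra. do 2 f_equal. field. lra.
  - intros i Hi. apply not_0_INR. simpl. specialize (nn_pos i Hi). lia.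
Qed.

(* Taking fractional parts only shifts the phase [2 pi h . p_k] by a multiple of [2 pi]. *)
Lemma lattice_point_phase h k : exists z,
  2 * PI * Rsum (fun j => IZR (h j) * lattice_point r Zm nn k j) d =
  Rsum (fun i => 2 * PI * IZR (ZT h i) * INR (k i) / INR (nn i)) r + 2 * PI * IZR z.
Proof.
  set (s := fun j => Rsum (fun i => IZR (Zm i j) * INR (k i) / INR (nn i)) r).
  exists (- Zsum (fun j => (h j * Int_part (s j))%Z) d)%Z.
  unfold lattice_point, frac_part. fold s.
  rewrite opp_IZR, IZR_Zsum.
  rewrite (Rsum_ext (fun j => IZR (h j) * (s j - IZR (Int_part (s j))))
                    (fun j => IZR (h j) * s j + - IZR (h j * Int_part (s j))%Z))
    by (intros; rewrite mult_IZR; ring).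
  rewrite Rsum_add, Rsum_opp.
  assert (E : Rsum (fun j => IZR (h j) * s j) d = Rsum (fun i => IZR (ZT h i) * INR (k i) / INR (nn i)) r).
  { unfold s.
    rewrite (Rsum_ext _ (fun j => Rsum (fun i => IZR (h j) * (IZR (Zm i j) * INR (k i) / INR (nn i))) r))
      by (intros; rewrite Rsum_mul_l; auto).
    rewrite Rsum_swap. apply Rsum_ext. intros i Hi. unfold ZT. rewrite IZR_Zsum.
    rewrite (Rsum_ext _ (fun j => INR (k i) / INR (nn i) * IZR (Zm i j * h j)))
      by (intros; rewrite mult_IZR; unfold Rdiv; ring).
    rewrite Rsum_mul_l. unfold Rdiv; ring. }
  rewrite E, Rmult_plus_distr_l, <- Rsum_mul_l.
  rewrite (Rsum_ext (fun i => 2 * PI * IZR (ZT h i) * INR (k i) / INR (nn i))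
                    (fun i => 2 * PI * (IZR (ZT h i) * INR (k i) / INR (nn i))))
    by (intros; unfold Rdiv; ring).
  ring.
Qed.

Lemma character_summand h c c' k :
  Cmul (Cexpi (2 * PI * Rsum (fun j => IZR (h j) * lattice_point r Zm nn (lexdig r nn k) j) d))
       (Cmul (Fn r nn c k) (Fninv r nn k c'))
  = Cmul (RtoC (/ INR n)) (Cprod (fun i =>
      Cexpi (2 * PI * IZR (dual_residue h c c' i) * INR (lexdig r nn k i) / INR (nn i))) r).
Proof.
  rewrite Fn_Fninv_entry. destruct (lattice_point_phase h (lexdig r nn k)) as [z ->].
  rewrite Cexpi_add_2PI_IZR, <- Cexpi_Rsum.
  set (t := Rsum _ r). set (t' := Rsum _ r).
  transitivity (Cmul (RtoC (/ INR n)) (Cexpi (t + t'))).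
  { rewrite Cexpi_add. unfold Cexpi. Cplx_ring. }
  unfold t, t'. rewrite <- Rsum_add. do 2 f_equal. apply Rsum_ext. intros i Hi.
  unfold dual_residue. rewrite plus_IZR, minus_IZR, <- !INR_IZR_INZ.
  field. apply not_0_INR. specialize (nn_pos i Hi). lia.
Qed.

Lemma lattice_character_sum h c c' :
  Csum (fun k => Cmul (Cexpi (2 * PI * Rsum (fun j => IZR (h j) * lattice_point r Zm nn (lexdig r nn k) j) d))
                      (Cmul (Fn r nn c k) (Fninv r nn k c'))) n
  = RtoC (indicator (dual_coset h c c')).
Proof.
  rewrite (Csum_ext _ _ _ (fun k _ => character_summand h c c' k)), Csum_mul_l.
  unfold npoints.
  assert (Hprod := Csum_digits_prod nn
    (fun i k => Cexpi (2 * PI * IZR (dual_residue h c c' i) * INR k / INR (nn i))) 0 r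
    ltac:(intros; apply nn_pos; lia)).
  cbn [Nat.add] in Hprod. change (digit nn 0 r ?k ?i) with (lexdig r nn k i) in Hprod.
  rewrite Hprod.
  rewrite (Cprod_cond (fun i => (Z.of_nat (nn i) | dual_residue h c c' i)%Z) (fun i => INR (nn i))).
  2:{ intros i Hi. destruct (excluded_middle_informative _).
      - apply Csum_roots_of_unity_div; auto.
      - apply Csum_roots_of_unity_ndiv; auto. }
  unfold indicator, dual_coset. destruct (excluded_middle_informative _).
  - rewrite <- (Rprod_ext (fun i => INR (nn (0 + i)))), <- INR_nprod_range by auto.
    assert (Hn := npoints_pos). unfold npoints in Hn. Cplx_ring. field. apply not_0_INR. lia.
  - Cplx_ring.
Qed.
End LatticeCharacterSum.

(** * Entries of W as aliased Fourier sums *)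

Definition Ccv (u : nat -> Cplx) (l : Cplx) : Prop :=
  Un_cv (fun N => Cre (u N)) (Cre l) /\ Un_cv (fun N => Cim (u N)) (Cim l).

Lemma Un_cv_const c : Un_cv (fun _ => c) c.
Proof. intros e He. exists 0%nat. intros. unfold Rdist. rewrite Rminus_diag, Rabs_R0. auto. Qed.

Lemma Ccv_const c : Ccv (fun _ => c) c.
Proof. split; apply Un_cv_const. Qed.

Lemma Ccv_add u v a b : Ccv u a -> Ccv v b -> Ccv (fun N => Cadd (u N) (v N)) (Cadd a b).
Proof. intros [A1 A2] [B1 B2]; split; simpl; apply CV_plus; auto. Qed.

Lemma Ccv_mul u v a b : Ccv u a -> Ccv v b -> Ccv (fun N => Cmul (u N) (v N)) (Cmul a b).
Proof.
  intros [A1 A2] [B1 B2]; split; simpl;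
    [apply CV_minus | apply CV_plus]; apply CV_mult; auto.
Qed.

Lemma Ccv_Csum u l n : (forall k, (k < n)%nat -> Ccv (fun N => u N k) (l k)) ->
  Ccv (fun N => Csum (u N) n) (Csum l n).
Proof.
  induction n; intros H; simpl; [apply Ccv_const |].
  apply Ccv_add; [apply IHn; intros |]; apply H; lia.
Qed.

Lemma Ccv_ext u v l : (forall N, u N = v N) -> Ccv u l -> Ccv v l.
Proof. intros E [A B]. split; eapply Un_cv_ext; eauto; intros; simpl; rewrite E; auto. Qed.

Lemma CsumL_mul_r {A} (l : list A) g c : Cmul (CsumL l g) c = CsumL l (fun h => Cmul (g h) c).
Proof. induction l; simpl. unfold C0; Cplx_ring. rewrite <- IHl. Cplx_ring. Qed.

Lemma Csum_CsumL {A} (l : list A) G n :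
  Csum (fun k => CsumL l (G k)) n = CsumL l (fun h => Csum (fun k => G k h) n).
Proof. induction l; simpl. apply Csum_zero. rewrite Csum_add, IHl. auto. Qed.

Lemma CsumL_ext {A} (l : list A) f g : (forall h, In h l -> f h = g h) -> CsumL l f = CsumL l g.
Proof.
  induction l; intros H; simpl; auto.
  rewrite H, IHl by (try (intros; apply H); simpl; tauto). auto.
Qed.

Section WEntries.
Variables (d r : nat) (Zm : nat -> nat -> Z) (nn : nat -> nat).
Hypothesis nn_pos : forall i, (i < r)%nat -> (1 <= nn i)%nat.
Variables (v : (nat -> R) -> Cplx) (vhat : (nat -> Z) -> Cplx).
Hypothesis v_fourier : forall x, fourier_series_at d vhat x (v x).

Notation n := (npoints r nn).
Notation p k := (lattice_point r Zm nn (lexdig r nn k)).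

Definition aliased_sum N c c' :=
  CsumL (boxlist d N) (fun h => Cmul (vhat h) (RtoC (indicator (dual_coset d r Zm nn h c c')))).

Definition fourier_partial_sum N (x : nat -> R) :=
  CsumL (boxlist d N) (fun h => Cmul (vhat h) (Cexpi (2 * PI * Rsum (fun j => IZR (h j) * x j) d))).

Lemma Wn_entry c c' : (c < n)%nat ->
  Wn r Zm nn v c c' = Csum (fun k => Cmul (v (p k)) (Cmul (Fn r nn c k) (Fninv r nn k c'))) n.
Proof.
  intros Hc. unfold Wn, Vn, Mmul at 1. apply Csum_ext. intros k Hk.
  fold (Mmul n (Fn r nn) (Mdiag (fun kappa => v (p kappa)))).
  rewrite Mmul_diag_r by auto. Cplx_ring.
Qed.

Lemma aliased_sum_eq N c c' :
  aliased_sum N c c' =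
  Csum (fun k => Cmul (fourier_partial_sum N (p k)) (Cmul (Fn r nn c k) (Fninv r nn k c'))) n.
Proof.
  unfold fourier_partial_sum. rewrite (Csum_ext _ _ _ (fun k _ => CsumL_mul_r _ _ _)), Csum_CsumL.
  apply CsumL_ext. intros h _.
  rewrite <- lattice_character_sum, <- Csum_mul_l by auto.
  apply Csum_ext. intros. Cplx_ring.
Qed.

Lemma aliased_sum_cv c c' : (c < n)%nat -> Ccv (fun N => aliased_sum N c c') (Wn r Zm nn v c c').
Proof.
  intros Hc. rewrite Wn_entry by auto.
  eapply Ccv_ext; [intros N; symmetry; apply aliased_sum_eq |].
  apply Ccv_Csum. intros k Hk. apply Ccv_mul; [apply v_fourier | apply Ccv_const].
Qed.
End WEntries.

Definition cmod (z : Cplx) := sqrt (Cnorm2 z).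

Lemma Cnorm2_nonneg z : 0 <= Cnorm2 z.
Proof. unfold Cnorm2. assert (H1 := pow2_ge_0 (Cre z)). assert (H2 := pow2_ge_0 (Cim z)). lra. Qed.

Lemma cmod_nonneg z : 0 <= cmod z.
Proof. apply sqrt_pos. Qed.

Lemma cmod_sqr z : cmod z ^ 2 = Cnorm2 z.
Proof. unfold cmod. simpl. rewrite Rmult_1_r. apply sqrt_sqrt, Cnorm2_nonneg. Qed.

Lemma cmod_mul a b : cmod (Cmul a b) = cmod a * cmod b.
Proof.
  unfold cmod. rewrite <- sqrt_mult by apply Cnorm2_nonneg. f_equal.
  unfold Cnorm2, Cmul; simpl. ring.
Qed.

Lemma cmod_RtoC x : cmod (RtoC x) = Rabs x.
Proof.
  unfold cmod, Cnorm2, RtoC; cbn [Cre Cim].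
  replace (x ^ 2 + 0 ^ 2) with x² by (unfold Rsqr; ring). apply sqrt_Rsqr_abs.
Qed.

Lemma cmod_C0 : cmod C0 = 0.
Proof. change C0 with (RtoC 0). rewrite cmod_RtoC, Rabs_R0. reflexivity. Qed.

Lemma cmod_triangle a b : cmod (Cadd a b) <= cmod a + cmod b.
Proof.
  unfold cmod. apply Rsqr_incr_0_var; [| apply Rplus_le_le_0_compat; apply sqrt_pos].
  rewrite Rsqr_sqrt by apply Cnorm2_nonneg. unfold Rsqr.
  assert (Ha := sqrt_sqrt _ (Cnorm2_nonneg a)). assert (Hb := sqrt_sqrt _ (Cnorm2_nonneg b)).
  assert (P1 := sqrt_pos (Cnorm2 a)). assert (P2 := sqrt_pos (Cnorm2 b)).
  set (sa := sqrt (Cnorm2 a)) in *. set (sb := sqrt (Cnorm2 b)) in *. clearbody sa sb.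
  unfold Cnorm2 in *. destruct a as [x1 y1], b as [x2 y2]. simpl in *.
  (* Cauchy-Schwarz for the real inner product of [a] and [b] *)
  assert (CS : x1 * x2 + y1 * y2 <= sa * sb).
  { destruct (Rle_dec (x1 * x2 + y1 * y2) 0); [nra |].
    apply Rsqr_incr_0_var; [| nra]. unfold Rsqr.
    replace (sa * sb * (sa * sb)) with (sa * sa * (sb * sb)) by ring. rewrite Ha, Hb.
    assert (0 <= (x1 * y2 - x2 * y1) ^ 2) by apply pow2_ge_0. nra. }
  nra.
Qed.

Lemma cmod_Csum f n : cmod (Csum f n) <= Rsum (fun k => cmod (f k)) n.
Proof.
  induction n; simpl; [rewrite cmod_C0; lra |].
  eapply Rle_trans; [apply cmod_triangle | lra].
Qed.

Lemma cmod_CsumL {A} (l : list A) f : cmod (CsumL l f) <= RsumL l (fun k => cmod (f k)).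
Proof.
  induction l; simpl; [rewrite cmod_C0; lra |].
  eapply Rle_trans; [apply cmod_triangle | lra].
Qed.

(** * Weighted summability of Korobov coefficients *)

Lemma ln_le_sub_1 y : 0 < y -> ln y <= y - 1.
Proof. intros Hy. assert (H := exp_ineq1_le (ln y)). rewrite exp_ln in H; lra. Qed.

Lemma Rpower_pos x y : 0 < Rpower x y.
Proof. apply exp_pos. Qed.

Lemma Rpower_1_l y : Rpower 1 y = 1.
Proof. unfold Rpower. rewrite ln_1, Rmult_0_r. apply exp_0. Qed.

(* [x^-q = (x+1)^-q exp (q ln ((x+1)/x))], with [exp t >= 1 + t] and [ln ((x+1)/x) >= 1/(x+1)]. *)
Lemma Rpower_telescope q x : 0 < q -> 0 < x ->
  q * Rpower (x + 1) (- (q + 1)) <= Rpower x (- q) - Rpower (x + 1) (- q).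
Proof.
  intros Hq Hx. unfold Rpower.
  set (L := ln (x + 1)). set (l := ln x).
  assert (HL : / (x + 1) <= L - l).
  { assert (H := ln_le_sub_1 (x / (x + 1)) ltac:(apply Rdiv_lt_0_compat; lra)).
    unfold Rdiv in H. rewrite ln_mult, ln_Rinv in H by (try apply Rinv_0_lt_compat; lra).
    fold L l in H. replace (x * / (x + 1) - 1) with (- / (x + 1)) in H by (field; lra). lra. }
  assert (E1 : exp (- q * l) = exp (- q * L) * exp (q * (L - l)))
    by (rewrite <- exp_plus; f_equal; ring).
  assert (E2 : exp (- (q + 1) * L) = exp (- q * L) * / (x + 1)).
  { replace (- (q + 1) * L) with (- q * L + - L) by ring.
    rewrite exp_plus, exp_Ropp. unfold L. rewrite exp_ln by lra. auto. }
  assert (E3 := exp_ineq1_le (q * (L - l))).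
  assert (P := exp_pos (- q * L)).
  assert (q * / (x + 1) <= q * (L - l)) by (apply Rmult_le_compat_l; lra).
  rewrite E1, E2. nra.
Qed.

Lemma zeta_partial_sum_le_telescoped p N : 1 < p ->
  Rsum (fun k => Rpower (INR (S k)) (- p)) (S N) <= 1 + (1 - Rpower (INR (S N)) (1 - p)) / (p - 1).
Proof.
  intros Hp. induction N.
  - simpl. rewrite Rplus_0_l, !Rpower_1_l. replace ((1 - 1) / (p - 1)) with 0 by (field; lra). lra.
  - change (Rsum (fun k => Rpower (INR (S k)) (- p)) (S (S N))) with
      (Rsum (fun k => Rpower (INR (S k)) (- p)) (S N) + Rpower (INR (S (S N))) (- p)).
    assert (T := Rpower_telescope (p - 1) (INR (S N)) ltac:(lra) ltac:(apply lt_0_INR; lia)).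
    rewrite (S_INR (S N)). replace (- (p - 1 + 1)) with (- p) in T by ring.
    replace (- (p - 1)) with (1 - p) in T by ring.
    apply (Rmult_le_reg_l (p - 1)); [lra |].
    apply (Rmult_le_compat_l (p - 1)) in IHN; [| lra].
    replace ((p - 1) * (1 + (1 - Rpower (INR (S N)) (1 - p)) / (p - 1)))
      with ((p - 1) + (1 - Rpower (INR (S N)) (1 - p))) in IHN by (field; lra).
    replace ((p - 1) * (1 + (1 - Rpower (INR (S N) + 1) (1 - p)) / (p - 1)))
      with ((p - 1) + (1 - Rpower (INR (S N) + 1) (1 - p))) by (field; lra).
    rewrite Rmult_plus_distr_l. lra.
Qed.

Lemma zeta_partial_sum_le p N : 1 < p -> Rsum (fun k => Rpower (INR (S k)) (- p)) N <= 1 + / (p - 1).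
Proof.
  intros Hp. assert (0 < / (p - 1)) by (apply Rinv_0_lt_compat; lra).
  destruct N; [simpl; lra |].
  eapply Rle_trans; [apply zeta_partial_sum_le_telescoped; auto |].
  assert (0 < Rpower (INR (S N)) (1 - p) * / (p - 1)) by (apply Rmult_lt_0_compat; auto using Rpower_pos).
  unfold Rdiv. rewrite Rmult_minus_distr_r, Rmult_1_l. lra.
Qed.

Lemma RsumL_app {A} (l1 l2 : list A) f : RsumL (l1 ++ l2) f = RsumL l1 f + RsumL l2 f.
Proof. induction l1; simpl. ring. rewrite IHl1. ring. Qed.

Lemma RsumL_map {A B} (l : list A) (g : A -> B) f : RsumL (map g l) f = RsumL l (fun x => f (g x)).
Proof. induction l; simpl; auto. rewrite IHl; auto. Qed.

Lemma RsumL_flat_map {A B} (l : list A) (g : A -> list B) f :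
  RsumL (flat_map g l) f = RsumL l (fun x => RsumL (g x) f).
Proof. induction l; simpl; auto. rewrite RsumL_app, IHl. auto. Qed.

Lemma RsumL_ext {A} (l : list A) f g : (forall h, In h l -> f h = g h) -> RsumL l f = RsumL l g.
Proof.
  induction l; intros H; simpl; auto.
  rewrite H, IHl by (try (intros; apply H); simpl; tauto). auto.
Qed.

Lemma RsumL_le {A} (l : list A) f g : (forall h, In h l -> f h <= g h) -> RsumL l f <= RsumL l g.
Proof.
  induction l; intros H; simpl; [lra |].
  apply Rplus_le_compat; [apply H | apply IHl; intros; apply H]; simpl; tauto.
Qed.

Lemma RsumL_mul_l {A} (l : list A) c f : RsumL l (fun x => c * f x) = c * RsumL l f.
Proof. induction l; simpl. ring. rewrite IHl. ring. Qed.

Lemma RsumL_add {A} (l : list A) f g : RsumL l (fun x => f x + g x) = RsumL l f + RsumL l g.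
Proof. induction l; simpl. ring. rewrite IHl. ring. Qed.

Lemma RsumL_nonneg {A} (l : list A) f : (forall h, In h l -> 0 <= f h) -> 0 <= RsumL l f.
Proof.
  induction l; intros H; simpl; [lra |].
  apply Rplus_le_le_0_compat; [apply H | apply IHl; intros; apply H]; simpl; tauto.
Qed.

Lemma zrange_S N : zrange (S N) = (- Z.of_nat (S N))%Z :: (zrange N ++ (Z.of_nat (S N) :: nil)).
Proof.
  unfold zrange. replace (2 * S N + 1)%nat with (S (S (2 * N + 1))) by lia.
  set (k := (2 * N + 1)%nat).
  change (seq 0 (S (S k))) with (0%nat :: seq 1 (S k)).
  rewrite seq_S, <- seq_shift, map_cons, map_app, map_map.
  f_equal. f_equal.
  - apply map_ext. intros; lia.
  - rewrite map_cons. f_equal. unfold k. lia.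
Qed.

Lemma RsumL_zrange N f :
  RsumL (zrange N) f = f 0%Z + Rsum (fun k => f (Z.of_nat (S k)) + f (- Z.of_nat (S k))%Z) N.
Proof. induction N; [simpl; ring |]. rewrite zrange_S. simpl. rewrite RsumL_app, IHN. simpl. ring. Qed.

Lemma RsumL_boxlist_prod (f : Z -> R) N m :
  RsumL (boxlist m N) (fun h => Rprod (fun j => f (h j)) m) = RsumL (zrange N) f ^ m.
Proof.
  induction m; simpl; [ring |].
  rewrite RsumL_flat_map, <- IHm, <- RsumL_mul_l.
  apply RsumL_ext. intros h _. rewrite RsumL_map.
  rewrite (RsumL_ext _ _ (fun t => Rprod (fun j => f (h j)) m * f t)).
  - rewrite RsumL_mul_l. ring.
  - intros t _. rewrite Nat.eqb_refl. f_equal.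
    apply Rprod_ext. intros j Hj. destruct (Nat.eqb_spec j m); [lia | auto].
Qed.

Definition sqnormZ (d : nat) (h : nat -> Z) : R := IZR (Zsum (fun j => (h j * h j)%Z) d).

Definition korobov_weight (d : nat) (alpha : R) (h : nat -> Z) : R :=
  Rprod (fun j => Rmax (Rpower (IZR (Z.abs (h j))) (2 * alpha)) 1) d.

Lemma sqnormZ_eq d h : sqnormZ d h = Rsum (fun j => IZR (h j) ^ 2) d.
Proof. unfold sqnormZ. rewrite IZR_Zsum. apply Rsum_ext. intros; rewrite mult_IZR; ring. Qed.

Lemma sqnormZ_nonneg d h : 0 <= sqnormZ d h.
Proof. rewrite sqnormZ_eq. apply Rsum_nonneg. intros; apply pow2_ge_0. Qed.

Lemma l2normZ_sqr d h : l2normZ d h ^ 2 = sqnormZ d h.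
Proof. unfold l2normZ. simpl. rewrite Rmult_1_r. apply sqrt_sqrt, sqnormZ_nonneg. Qed.

Lemma sqnormZ_add_le d h1 h2 : sqnormZ d (fun j => (h1 j + h2 j)%Z) <= 2 * sqnormZ d h1 + 2 * sqnormZ d h2.
Proof.
  rewrite !sqnormZ_eq, <- !Rsum_mul_l, <- Rsum_add. apply Rsum_le. intros k _.
  rewrite plus_IZR. assert (H := pow2_ge_0 (IZR (h1 k) - IZR (h2 k))). nra.
Qed.

Lemma Rmax_1_pos x : 0 < Rmax x 1.
Proof. eapply Rlt_le_trans; [| apply Rmax_r]. lra. Qed.

Lemma korobov_weight_pos d alpha h : 0 < korobov_weight d alpha h.
Proof. apply Rprod_pos. intros. apply Rmax_1_pos. Qed.

Definition decay_exponent (alpha : R) (m : nat) : R := 2 * alpha - INR (4 * m).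

Section KorobovWeights.
Variables (alpha : R) (m : nat).
Hypothesis decay_gt_1 : 1 < decay_exponent alpha m.

Definition weight_ratio (t : Z) := (1 + IZR t ^ 2) ^ (2 * m) / Rmax (Rpower (IZR (Z.abs t)) (2 * alpha)) 1.

Lemma weight_ratio_nonneg t : 0 <= weight_ratio t.
Proof.
  apply Rle_mult_inv_pos; [| apply Rmax_1_pos].
  apply pow_le. assert (0 <= IZR t ^ 2) by apply pow2_ge_0. lra.
Qed.

Lemma weight_ratio_0 : weight_ratio 0 <= 1.
Proof.
  unfold weight_ratio. simpl IZR. rewrite pow_i, Rplus_0_r, pow1 by lia.
  assert (H := Rmax_r (Rpower 0 (2 * alpha)) 1).
  apply Rmult_le_reg_l with (Rmax (Rpower 0 (2 * alpha)) 1); [lra |].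
  unfold Rdiv. rewrite Rmult_1_l, Rinv_r; lra.
Qed.

Lemma weight_ratio_le t : t <> 0%Z ->
  weight_ratio t <= 2 ^ (2 * m) * Rpower (IZR (Z.abs t)) (- decay_exponent alpha m).
Proof.
  intros Ht. set (x := IZR (Z.abs t)).
  assert (Hx : 1 <= x) by (apply IZR_le; lia).
  assert (Ex : IZR t ^ 2 = x ^ 2) by (unfold x; rewrite abs_IZR, <- (pow2_abs (IZR t)); auto).
  unfold weight_ratio. fold x. rewrite Ex.
  assert (Hp0 : 0 < Rpower x (2 * alpha)) by apply Rpower_pos.
  apply Rle_trans with ((2 * x ^ 2) ^ (2 * m) / Rpower x (2 * alpha)).
  - unfold Rdiv. apply Rmult_le_compat.
    + apply pow_le. nra.
    + left. apply Rinv_0_lt_compat, Rmax_1_pos.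
    + apply pow_incr. nra.
    + apply Rinv_le_contravar; auto. apply Rmax_l.
  - rewrite Rpow_mult_distr, <- pow_mult, pow_mult, <- (Rpower_pow (2 * (2 * m)) x) by lra.
    unfold decay_exponent. rewrite Ropp_minus_distr. unfold Rminus. rewrite Rpower_plus, Rpower_Ropp.
    replace (INR (2 * (2 * m))) with (INR (4 * m)) by (f_equal; lia).
    right. unfold Rdiv. ring.
Qed.

Definition weight_ratio_sum_bound := 1 + 2 * 2 ^ (2 * m) * (1 + / (decay_exponent alpha m - 1)).

Lemma RsumL_zrange_weight_ratio_le N : RsumL (zrange N) weight_ratio <= weight_ratio_sum_bound.
Proof.
  rewrite RsumL_zrange. unfold weight_ratio_sum_bound. apply Rplus_le_compat; [apply weight_ratio_0 |].
  apply Rle_trans with (Rsum (fun k => 2 * 2 ^ (2 * m) * Rpower (INR (S k)) (- decay_exponent alpha m)) N).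
  - apply Rsum_le. intros k Hk.
    assert (A1 := weight_ratio_le (Z.of_nat (S k)) ltac:(lia)).
    assert (A2 := weight_ratio_le (- Z.of_nat (S k)) ltac:(lia)).
    replace (IZR (Z.abs (Z.of_nat (S k)))) with (INR (S k)) in A1 by (rewrite INR_IZR_INZ; f_equal; lia).
    replace (IZR (Z.abs (- Z.of_nat (S k)))) with (INR (S k)) in A2 by (rewrite INR_IZR_INZ; f_equal; lia).
    lra.
  - rewrite Rsum_mul_l. apply Rmult_le_compat_l; [assert (0 < 2 ^ (2 * m)) by (apply pow_lt; lra); lra |].
    apply zeta_partial_sum_le; auto.
Qed.

Lemma weight_ratio_prod_ge d h :
  (1 + sqnormZ d h) ^ (2 * m) / korobov_weight d alpha h <= Rprod (fun j => weight_ratio (h j)) d.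
Proof.
  unfold weight_ratio, Rdiv, korobov_weight.
  rewrite Rprod_mul, Rprod_inv by (intros; apply Rgt_not_eq, Rmax_1_pos).
  apply Rmult_le_compat_r; [left; apply Rinv_0_lt_compat, Rprod_pos; intros; apply Rmax_1_pos |].
  rewrite Rprod_pow. apply pow_incr. split; [assert (H := sqnormZ_nonneg d h); lra |].
  rewrite sqnormZ_eq. apply sum_le_prod_succ. intros; apply pow2_ge_0.
Qed.
End KorobovWeights.

Lemma sqrt_mul_le_AM_GM a w r : 0 <= a -> 0 < r -> sqrt a * w <= (a * r + w ^ 2 / r) / 2.
Proof.
  intros Ha Hr. assert (Hs := sqrt_sqrt a Ha). set (s := sqrt a) in *. clearbody s.
  apply (Rmult_le_reg_l (2 * r)); [lra |].
  replace (2 * r * ((a * r + w ^ 2 / r) / 2)) with (a * r * r + w ^ 2) by (field; lra).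
  rewrite <- Hs. assert (H := pow2_ge_0 (s * r - w)). nra.
Qed.

(* Split [|vhat h| (1+|h|^2)^m] by AM-GM against the Korobov weight: the first part is the
   Korobov norm, the second a product of one-dimensional series of [weight_ratio]. *)
Lemma korobov_weighted_l1_bound d alpha m vhat : 1 < decay_exponent alpha m -> korobov d alpha vhat ->
  exists A, 1 <= A /\ forall N, RsumL (boxlist d N) (fun h => cmod (vhat h) * (1 + sqnormZ d h) ^ m) <= A.
Proof.
  intros Hp [M HM].
  exists (Rmax 1 ((M + weight_ratio_sum_bound alpha m ^ d) / 2)). split; [apply Rmax_l |]. intros N.
  eapply Rle_trans; [| apply Rmax_r].
  apply Rle_trans with (RsumL (boxlist d N) (fun h => (Cnorm2 (vhat h) * korobov_weight d alpha h
    + ((1 + sqnormZ d h) ^ m) ^ 2 / korobov_weight d alpha h) / 2)).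
  { apply RsumL_le. intros h _.
    apply sqrt_mul_le_AM_GM; [apply Cnorm2_nonneg | apply korobov_weight_pos]. }
  rewrite (RsumL_ext _ _ (fun h => / 2 * (Cnorm2 (vhat h) * korobov_weight d alpha h
    + (1 + sqnormZ d h) ^ (2 * m) / korobov_weight d alpha h)))
    by (intros; rewrite <- pow_mult, (Nat.mul_comm m 2); unfold Rdiv; ring).
  rewrite RsumL_mul_l, RsumL_add.
  apply Rle_trans with (/ 2 * (M + weight_ratio_sum_bound alpha m ^ d)); [| right; unfold Rdiv; ring].
  apply Rmult_le_compat_l; [lra |]. apply Rplus_le_compat; [apply HM |].
  apply Rle_trans with (RsumL (boxlist d N) (fun h => Rprod (fun j => weight_ratio alpha m (h j)) d)).
  - apply RsumL_le. intros; apply weight_ratio_prod_ge.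
  - rewrite RsumL_boxlist_prod. apply pow_incr. split.
    + apply RsumL_nonneg. intros; apply weight_ratio_nonneg.
    + apply RsumL_zrange_weight_ratio_le; auto.
Qed.

(** * Schur test *)

Lemma Rsum_indicator_le_1 (P : nat -> Prop) n :
  (forall a b, (a < n)%nat -> (b < n)%nat -> P a -> P b -> a = b) ->
  Rsum (fun k => indicator (P k)) n <= 1.
Proof.
  induction n; intros H; simpl; [lra |].
  unfold indicator at 2. destruct (excluded_middle_informative (P n)) as [Pn | Pn].
  - rewrite (Rsum_ext _ (fun _ => 0)), Rsum_zero; [lra |].
    intros k Hk. unfold indicator. destruct (excluded_middle_informative (P k)); auto.
    assert (k = n) by (apply H; auto). lia.
  - assert (Rsum (fun k => indicator (P k)) n <= 1) by (apply IHn; intros; apply H; auto). lra.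
Qed.

Lemma Rsum_RsumL {A} (l : list A) F n :
  Rsum (fun k => RsumL l (F k)) n = RsumL l (fun h => Rsum (fun k => F k h) n).
Proof. induction l; simpl; [apply Rsum_zero |]. rewrite Rsum_add, IHl. auto. Qed.

Lemma weighted_cauchy_schwarz n w z A : 0 < A -> (forall k, (k < n)%nat -> 0 <= w k) -> Rsum w n <= A ->
  Rsum (fun k => w k * z k) n ^ 2 <= A * Rsum (fun k => w k * z k ^ 2) n.
Proof.
  intros HA Hw HW.
  set (S := Rsum (fun k => w k * z k) n). set (Q := Rsum (fun k => w k * z k ^ 2) n).
  assert (H : forall t, 0 <= Q - 2 * t * S + t ^ 2 * A).
  { intros t. apply Rle_trans with (Rsum (fun k => w k * (z k - t) ^ 2) n).
    - apply Rsum_nonneg. intros k Hk. apply Rmult_le_pos; auto. apply pow2_ge_0.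
    - replace (Rsum (fun k => w k * (z k - t) ^ 2) n) with (Q - 2 * t * S + t ^ 2 * Rsum w n).
      + assert (0 <= t ^ 2) by apply pow2_ge_0. nra.
      + unfold Q, S. rewrite <- !Rsum_mul_l. unfold Rminus. rewrite <- Rsum_opp, <- !Rsum_add.
        apply Rsum_ext. intros; ring. }
  specialize (H (S / A)). clearbody S Q.
  replace (Q - 2 * (S / A) * S + (S / A) ^ 2 * A) with (Q - S ^ 2 / A) in H by (field; lra).
  apply (Rmult_le_reg_r (/ A)); [apply Rinv_0_lt_compat; auto |].
  replace (A * Q * / A) with Q by (field; lra). unfold Rdiv in H. lra.
Qed.

Lemma schur_test n (om : nat -> nat -> R) (z u : nat -> R) A : 0 < A ->
  (forall c c', (c < n)%nat -> (c' < n)%nat -> 0 <= om c c') ->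
  (forall c, (c < n)%nat -> Rsum (fun c' => om c c') n <= A) ->
  (forall c', (c' < n)%nat -> Rsum (fun c => om c c') n <= A) ->
  (forall c, (c < n)%nat -> 0 <= u c <= Rsum (fun c' => om c c' * z c') n) ->
  Rsum (fun c => u c ^ 2) n <= A ^ 2 * Rsum (fun c => z c ^ 2) n.
Proof.
  intros HA Hom Hr Hc Hu.
  apply Rle_trans with (Rsum (fun c => A * Rsum (fun c' => om c c' * z c' ^ 2) n) n).
  - apply Rsum_le. intros c Hcn. destruct (Hu c Hcn) as [U1 U2].
    eapply Rle_trans; [| apply weighted_cauchy_schwarz; auto].
    apply pow_incr; auto.
  - rewrite Rsum_mul_l, Rsum_swap. simpl. rewrite Rmult_1_r, Rmult_assoc.
    apply Rmult_le_compat_l; [lra |].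
    rewrite <- Rsum_mul_l. apply Rsum_le. intros c' Hc'.
    rewrite (Rsum_ext _ (fun c => z c' ^ 2 * om c c')), Rsum_mul_l, Rmult_comm by (intros; ring).
    apply Rmult_le_compat_r; [apply pow2_ge_0 | auto].
Qed.

(** * Diagonal entries of D on a minimal-norm anti-aliasing set *)

Definition D_entry (d : nat) (hs : nat -> nat -> Z) (gamma : R) (c : nat) : R :=
  gamma / 2 * (4 * PI ^ 2 * l2normZ d (hs c) ^ 2).

Lemma D_entry_eq d hs gamma c : D_entry d hs gamma c = 2 * PI ^ 2 * gamma * sqnormZ d (hs c).
Proof. unfold D_entry. rewrite l2normZ_sqr. field. Qed.

Lemma scaled_Dn_eq d hs gamma :
  Mscale (gamma / 2) (Dn d hs) = Mdiag (fun c => RtoC (D_entry d hs gamma c)).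
Proof. unfold Dn, D_entry. rewrite Mscale_diag. f_equal. extensionality c. Cplx_ring. Qed.

Lemma digit_eq_of_congr (N x y : nat) : (x < N)%nat -> (y < N)%nat ->
  (Z.of_nat N | Z.of_nat x - Z.of_nat y)%Z -> x = y.
Proof.
  intros Hx Hy [k Hk].
  assert (k = 0)%Z by (destruct (Z.lt_trichotomy k 0) as [? | [? | ?]]; nia). subst. lia.
Qed.

Lemma abs_diff_le_of_sqnorm_le kappa a a' b : 0 < kappa -> 0 <= a -> 0 <= a' -> 0 <= b ->
  a <= 2 * a' + 2 * b ->
  Rabs (kappa * a - kappa * a') <= (2 * kappa + 2) * (1 + kappa * a') * (1 + b).
Proof.
  intros Hk Ha Ha' Hb Hle.
  assert (0 <= kappa * a) by nra. assert (0 <= kappa * a') by nra.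
  assert (0 <= kappa * b) by nra. assert (0 <= kappa * a' * b) by (apply Rmult_le_pos; nra).
  assert (0 <= kappa * kappa * a') by (apply Rmult_le_pos; nra).
  assert (0 <= kappa * kappa * a' * b) by (apply Rmult_le_pos; nra).
  apply Rabs_le. split; nra.
Qed.

Section MinimalNorm.
Variables (d r : nat) (Zm : nat -> nat -> Z) (nn : nat -> nat) (hs : nat -> nat -> Z).
Hypothesis nn_pos : forall i, (i < r)%nat -> (1 <= nn i)%nat.
Hypothesis hs_min : min_norm_antialias d r Zm nn hs.

Notation n := (npoints r nn).
Notation coset := (dual_coset d r Zm nn).

Lemma lexdig_inj_mod c1 c2 : (c1 < n)%nat -> (c2 < n)%nat ->
  (forall i, (i < r)%nat ->
     (Z.of_nat (nn i) | Z.of_nat (lexdig r nn c1 i) - Z.of_nat (lexdig r nn c2 i))%Z) ->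
  c1 = c2.
Proof.
  intros H1 H2 Hcong. apply (digits_inj nn 0 r); auto. intros i Hi.
  apply (digit_eq_of_congr (nn i)); [apply (digit_lt nn 0) .. | apply Hcong]; auto.
Qed.

Lemma dual_coset_unique_r h c c1 c2 : (c1 < n)%nat -> (c2 < n)%nat ->
  coset h c c1 -> coset h c c2 -> c1 = c2.
Proof.
  intros H1 H2 A B. apply lexdig_inj_mod; auto. intros i Hi.
  assert (D := Z.divide_sub_r _ _ _ (A i Hi) (B i Hi)). unfold dual_residue in D.
  replace (Z.of_nat (lexdig r nn c1 i) - Z.of_nat (lexdig r nn c2 i))%Z with
    (ZT d Zm h i - Z.of_nat (lexdig r nn c i) + Z.of_nat (lexdig r nn c1 i) -
    (ZT d Zm h i - Z.of_nat (lexdig r nn c i) + Z.of_nat (lexdig r nn c2 i)))%Z by ring. auto.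
Qed.

Lemma dual_coset_unique_l h c' c1 c2 : (c1 < n)%nat -> (c2 < n)%nat ->
  coset h c1 c' -> coset h c2 c' -> c1 = c2.
Proof.
  intros H1 H2 A B. apply lexdig_inj_mod; auto. intros i Hi.
  assert (D := Z.divide_sub_r _ _ _ (B i Hi) (A i Hi)). unfold dual_residue in D.
  replace (Z.of_nat (lexdig r nn c1 i) - Z.of_nat (lexdig r nn c2 i))%Z with
    (ZT d Zm h i - Z.of_nat (lexdig r nn c2 i) + Z.of_nat (lexdig r nn c' i) -
    (ZT d Zm h i - Z.of_nat (lexdig r nn c1 i) + Z.of_nat (lexdig r nn c' i)))%Z by ring. auto.
Qed.

(* [h_c' + h] lies in the class of [xi_c], where [h_c] has minimal norm. *)
Lemma sqnormZ_min_le c c' h : (c < n)%nat -> (c' < n)%nat -> coset h c c' ->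
  sqnormZ d (hs c) <= 2 * sqnormZ d (hs c') + 2 * sqnormZ d h.
Proof.
  intros Hc Hc' Hcl.
  set (h' := fun j => (hs c' j + h j)%Z).
  assert (Hdc : dual_cong d r Zm nn h' (lexdig r nn c)).
  { destruct (hs_min c' Hc') as [Dc' _]. intros i Hi. unfold h'.
    rewrite (Zsum_ext _ (fun j => (Zm i j * hs c' j + Zm i j * h j)%Z)), Zsum_add by (intros; ring).
    replace (Zsum (fun j => (Zm i j * hs c' j)%Z) d + Zsum (fun j => (Zm i j * h j)%Z) d
             - Z.of_nat (lexdig r nn c i))%Z
      with ((Zsum (fun j => (Zm i j * hs c' j)%Z) d - Z.of_nat (lexdig r nn c' i)) +
            dual_residue d r Zm nn h c c' i)%Z by (unfold dual_residue, ZT; ring).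
    apply Z.divide_add_r; [apply Dc' | apply Hcl]; auto. }
  destruct (hs_min c Hc) as [_ Hminc].
  apply Rle_trans with (sqnormZ d h'); [| apply sqnormZ_add_le].
  rewrite <- !l2normZ_sqr. apply pow_incr. split; [apply sqrt_pos | auto].
Qed.
End MinimalNorm.

Definition D_diff_const (gamma : R) : R := 2 * (2 * PI ^ 2 * gamma) + 2.

Lemma D_diff_const_pos gamma : 0 < gamma -> 0 < D_diff_const gamma.
Proof.
  intros Hg. unfold D_diff_const. assert (H := PI_RGT_0).
  assert (0 < PI ^ 2) by (apply pow_lt; lra). nra.
Qed.

Section TruncatedCommutator.
Variables (d r : nat) (Zm : nat -> nat -> Z) (nn : nat -> nat) (hs : nat -> nat -> Z).
Hypothesis nn_pos : forall i, (i < r)%nat -> (1 <= nn i)%nat.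
Hypothesis hs_min : min_norm_antialias d r Zm nn hs.
Variable gamma : R.
Hypothesis gamma_pos : 0 < gamma.
Variables (vhat : (nat -> Z) -> Cplx) (m : nat) (A : R).
Hypothesis A_ge_1 : 1 <= A.
Hypothesis vhat_summable :
  forall N, RsumL (boxlist d N) (fun h => cmod (vhat h) * (1 + sqnormZ d h) ^ m) <= A.
Variable y : nat -> R.

Notation n := (npoints r nn).
Notation D := (D_entry d hs gamma).
Notation coset := (dual_coset d r Zm nn).

Lemma D_entry_diff_le c c' h : (c < n)%nat -> (c' < n)%nat -> coset h c c' ->
  Rabs (D c - D c') <= D_diff_const gamma * (1 + D c') * (1 + sqnormZ d h).
Proof.
  intros Hc Hc' Hcl. rewrite !D_entry_eq. unfold D_diff_const.
  assert (0 < 2 * PI ^ 2 * gamma) by (assert (H := D_diff_const_pos gamma gamma_pos);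
    unfold D_diff_const in H; assert (0 < PI ^ 2) by (apply pow_lt, PI_RGT_0); nra).
  apply abs_diff_le_of_sqnorm_le; auto using sqnormZ_nonneg.
  eapply sqnormZ_min_le; eauto.
Qed.

Definition ad_kernel_const := D_diff_const gamma ^ m / gamma.

Definition schur_kernel N c c' := ad_kernel_const *
  RsumL (boxlist d N) (fun h => indicator (coset h c c') * (cmod (vhat h) * (1 + sqnormZ d h) ^ m)).

Definition truncated_ad N c := Csum (fun c' =>
  Cmul (Cmul (RtoC ((D c - D c') ^ m / gamma)) (aliased_sum d r Zm nn vhat N c c')) (RtoC (y c'))) n.

Lemma ad_kernel_const_pos : 0 < ad_kernel_const.
Proof. apply Rdiv_lt_0_compat; auto. apply pow_lt, D_diff_const_pos; auto. Qed.

Lemma coset_weight_nonneg h c c' : 0 <= indicator (coset h c c') * (cmod (vhat h) * (1 + sqnormZ d h) ^ m).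
Proof.
  apply Rmult_le_pos; [apply indicator_bounds |].
  apply Rmult_le_pos; [apply cmod_nonneg | apply pow_le; assert (H := sqnormZ_nonneg d h); lra].
Qed.

Lemma schur_kernel_nonneg N c c' : 0 <= schur_kernel N c c'.
Proof.
  apply Rmult_le_pos; [left; apply ad_kernel_const_pos |].
  apply RsumL_nonneg. intros; apply coset_weight_nonneg.
Qed.

Lemma coset_diff_pow_le h c c' : (c < n)%nat -> (c' < n)%nat ->
  indicator (coset h c c') * (cmod (vhat h) * (Rabs (D c - D c') ^ m / gamma))
  <= ad_kernel_const * (1 + D c') ^ m * (indicator (coset h c c') * (cmod (vhat h) * (1 + sqnormZ d h) ^ m)).
Proof.
  intros Hc Hc'. unfold indicator, ad_kernel_const.
  destruct (excluded_middle_informative (coset h c c')) as [Hcl | Hcl]; [| right; ring].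
  assert (Hp : Rabs (D c - D c') ^ m <= (D_diff_const gamma * (1 + D c') * (1 + sqnormZ d h)) ^ m).
  { apply pow_incr. split; [apply Rabs_pos | apply D_entry_diff_le; auto]. }
  rewrite !Rpow_mult_distr in Hp.
  assert (0 <= cmod (vhat h) / gamma) by (apply Rle_mult_inv_pos; [apply cmod_nonneg | auto]).
  apply Rle_trans with (cmod (vhat h) / gamma * Rabs (D c - D c') ^ m); [right; unfold Rdiv; ring |].
  apply Rle_trans with (cmod (vhat h) / gamma *
    (D_diff_const gamma ^ m * (1 + D c') ^ m * (1 + sqnormZ d h) ^ m)); [apply Rmult_le_compat_l; auto |].
  right; unfold Rdiv; ring.
Qed.

Lemma cmod_aliased_sum_le N c c' : cmod (aliased_sum d r Zm nn vhat N c c')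
  <= RsumL (boxlist d N) (fun h => indicator (coset h c c') * cmod (vhat h)).
Proof.
  eapply Rle_trans; [apply cmod_CsumL |]. apply RsumL_le. intros h _.
  rewrite cmod_mul, cmod_RtoC, (Rabs_pos_eq (indicator _)) by apply indicator_bounds. lra.
Qed.

Lemma truncated_ad_le N c : (c < n)%nat ->
  cmod (truncated_ad N c) <= Rsum (fun c' => schur_kernel N c c' * ((1 + D c') ^ m * Rabs (y c'))) n.
Proof.
  intros Hc. eapply Rle_trans; [apply cmod_Csum |]. apply Rsum_le. intros c' Hc'.
  rewrite !cmod_mul, !cmod_RtoC, <- Rmult_assoc. apply Rmult_le_compat_r; [apply Rabs_pos |].
  assert (Habs : Rabs ((D c - D c') ^ m / gamma) = Rabs (D c - D c') ^ m / gamma).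
  { unfold Rdiv. rewrite Rabs_mult, RPow_abs, Rabs_inv, (Rabs_pos_eq gamma) by lra. auto. }
  rewrite Habs. eapply Rle_trans.
  { apply Rmult_le_compat_l; [apply Rle_mult_inv_pos; [apply pow_le, Rabs_pos | auto] |].
    apply cmod_aliased_sum_le. }
  rewrite <- RsumL_mul_l.
  apply Rle_trans with (RsumL (boxlist d N) (fun h => ad_kernel_const * (1 + D c') ^ m *
    (indicator (coset h c c') * (cmod (vhat h) * (1 + sqnormZ d h) ^ m)))).
  - apply RsumL_le. intros h _. eapply Rle_trans; [| apply coset_diff_pow_le; auto]. right; ring.
  - rewrite RsumL_mul_l. unfold schur_kernel. right; ring.
Qed.

Lemma schur_kernel_row_sum_le N c : (c < n)%nat ->
  Rsum (fun c' => schur_kernel N c c') n <= ad_kernel_const * A.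
Proof.
  intros Hc. unfold schur_kernel. rewrite Rsum_mul_l.
  apply Rmult_le_compat_l; [left; apply ad_kernel_const_pos |].
  rewrite Rsum_RsumL. eapply Rle_trans; [| apply (vhat_summable N)]. apply RsumL_le. intros h _.
  rewrite (Rsum_ext _ (fun k => (cmod (vhat h) * (1 + sqnormZ d h) ^ m) * indicator (coset h c k)))
    by (intros; ring).
  rewrite Rsum_mul_l. rewrite <- (Rmult_1_r (cmod (vhat h) * _)) at 2.
  apply Rmult_le_compat_l.
  - apply Rmult_le_pos; [apply cmod_nonneg | apply pow_le; assert (H := sqnormZ_nonneg d h); lra].
  - apply Rsum_indicator_le_1. intros a b Ha Hb Pa Pb. eapply dual_coset_unique_r; eauto.
Qed.

Lemma schur_kernel_col_sum_le N c' : (c' < n)%nat ->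
  Rsum (fun c => schur_kernel N c c') n <= ad_kernel_const * A.
Proof.
  intros Hc. unfold schur_kernel. rewrite Rsum_mul_l.
  apply Rmult_le_compat_l; [left; apply ad_kernel_const_pos |].
  rewrite Rsum_RsumL. eapply Rle_trans; [| apply (vhat_summable N)]. apply RsumL_le. intros h _.
  rewrite (Rsum_ext _ (fun k => (cmod (vhat h) * (1 + sqnormZ d h) ^ m) * indicator (coset h k c')))
    by (intros; ring).
  rewrite Rsum_mul_l. rewrite <- (Rmult_1_r (cmod (vhat h) * _)) at 2.
  apply Rmult_le_compat_l.
  - apply Rmult_le_pos; [apply cmod_nonneg | apply pow_le; assert (H := sqnormZ_nonneg d h); lra].
  - apply Rsum_indicator_le_1. intros a b Ha Hb Pa Pb. eapply dual_coset_unique_l; eauto.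
Qed.

Lemma truncated_ad_sqsum_le N :
  Rsum (fun c => cmod (truncated_ad N c) ^ 2) n
  <= (ad_kernel_const * A) ^ 2 * Rsum (fun c => ((1 + D c) ^ m * Rabs (y c)) ^ 2) n.
Proof.
  apply schur_test with (om := schur_kernel N).
  - apply Rmult_lt_0_compat; [apply ad_kernel_const_pos | lra].
  - intros; apply schur_kernel_nonneg.
  - apply schur_kernel_row_sum_le.
  - apply schur_kernel_col_sum_le.
  - intros c Hc. split; [apply cmod_nonneg | apply truncated_ad_le; auto].
Qed.
End TruncatedCommutator.

Lemma Un_cv_Rsum u l n : (forall k, (k < n)%nat -> Un_cv (fun N => u N k) (l k)) ->
  Un_cv (fun N => Rsum (u N) n) (Rsum l n).
Proof.
  induction n; intros H; simpl; [apply Un_cv_const |].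
  apply CV_plus; [apply IHn; intros |]; apply H; lia.
Qed.

Lemma vnorm_cv n u l : (forall k, (k < n)%nat -> Ccv (fun N => u N k) (l k)) ->
  Un_cv (fun N => vnorm n (u N)) (vnorm n l).
Proof.
  intros H. unfold vnorm. apply continuity_seq.
  - apply continuity_pt_sqrt. apply Rsum_nonneg; intros; apply Cnorm2_nonneg.
  - apply Un_cv_Rsum. intros k Hk. destruct (H k Hk) as [Hre Him]. unfold Cnorm2.
    apply CV_plus; apply CV_mult; auto; apply CV_mult; auto; apply Un_cv_const.
Qed.

Lemma vnorm_le_of_sqsum_le n u z K : 0 <= K ->
  Rsum (fun c => cmod (u c) ^ 2) n <= K ^ 2 * Rsum (fun c => cmod (z c) ^ 2) n ->
  vnorm n u <= K * vnorm n z.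
Proof.
  intros HK H. unfold vnorm.
  rewrite !(Rsum_ext (fun c => cmod (_ c) ^ 2) (fun c => Cnorm2 (_ c))) in H
    by (intros; apply cmod_sqr).
  rewrite <- (sqrt_pow2 K HK) at 1.
  rewrite <- sqrt_mult by (try apply pow2_ge_0; apply Rsum_nonneg; intros; apply Cnorm2_nonneg).
  apply sqrt_le_1_alt. auto.
Qed.

Lemma Mvec_Mad_D_W d hs gamma r Zm nn v m y c : 0 < gamma -> (c < npoints r nn)%nat ->
  Mvec (npoints r nn) (Mad (npoints r nn) (Mscale (gamma / 2) (Dn d hs)) m
    (Mscale (1 / gamma) (Wn r Zm nn v))) (fun k => RtoC (y k)) c =
  Csum (fun c' => Cmul (Cmul (RtoC ((D_entry d hs gamma c - D_entry d hs gamma c') ^ m / gamma))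
                             (Wn r Zm nn v c c')) (RtoC (y c'))) (npoints r nn).
Proof.
  intros Hg Hc. unfold Mvec. apply Csum_ext. intros c' Hc'.
  rewrite scaled_Dn_eq, Mad_diag by auto. unfold Mscale. Cplx_ring; field; lra.
Qed.

Lemma D_entry_nonneg d hs gamma c : 0 < gamma -> 0 <= D_entry d hs gamma c.
Proof.
  intros Hg. rewrite D_entry_eq. apply Rmult_le_pos; [| apply sqnormZ_nonneg].
  assert (0 < PI ^ 2) by (apply pow_lt, PI_RGT_0). nra.
Qed.

Theorem ad_D_W_bound d gamma alpha v vhat m :
  0 < gamma -> 1 < decay_exponent alpha m ->
  korobov d alpha vhat -> (forall x, fourier_series_at d vhat x (v x)) ->
  exists C, forall r Zm nn hs (y : nat -> R),
    canonical_lattice d r Zm nn -> min_norm_antialias d r Zm nn hs ->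
    let n := npoints r nn in
    vnorm n (Mvec n (Mad n (Mscale (gamma / 2) (Dn d hs)) m (Mscale (1 / gamma) (Wn r Zm nn v)))
                 (fun k => RtoC (y k)))
    <= C * vnorm n (fun c => RtoC ((1 + D_entry d hs gamma c) ^ m * y c)).
Proof.
  intros Hg Hp Hk Hfs. destruct (korobov_weighted_l1_bound d alpha m vhat Hp Hk) as [A [HA1 HA]].
  exists (ad_kernel_const gamma m * A). intros r Zm nn hs y Hcan Hmin; cbv zeta.
  assert (Hpos : forall i, (i < r)%nat -> (1 <= nn i)%nat) by apply Hcan.
  assert (HK : 0 < ad_kernel_const gamma m * A)
    by (apply Rmult_lt_0_compat; [apply ad_kernel_const_pos | lra]; auto).
  rewrite (vnorm_ext _ _ _ (fun c Hc => Mvec_Mad_D_W d hs gamma r Zm nn v m y c Hg Hc)).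
  set (n := npoints r nn).
  apply Rle_cv_lim with (Un := fun N => vnorm n (truncated_ad d r Zm nn hs gamma vhat m y N))
    (Vn := fun _ => ad_kernel_const gamma m * A *
                    vnorm n (fun c => RtoC ((1 + D_entry d hs gamma c) ^ m * y c))).
  - intros N. apply vnorm_le_of_sqsum_le; [lra |].
    rewrite (Rsum_ext (fun c => cmod (RtoC _) ^ 2)
                      (fun c => ((1 + D_entry d hs gamma c) ^ m * Rabs (y c)) ^ 2)).
    + apply truncated_ad_sqsum_le; auto.
    + intros c _. rewrite cmod_RtoC, Rabs_mult, (Rabs_pos_eq (_ ^ m)); auto.
      apply pow_le. assert (H := D_entry_nonneg d hs gamma c Hg). lra.
  - apply vnorm_cv. intros c Hc. apply Ccv_Csum. intros c' Hc'.
    apply Ccv_mul; [apply Ccv_mul; [apply Ccv_const | apply aliased_sum_cv; auto] | apply Ccv_const].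
  - apply Un_cv_const.
Qed.

Lemma Mvec_D_plus_id d hs gamma n y c : (c < n)%nat ->
  Mvec n (Madd (Mscale (gamma / 2) (Dn d hs)) Mid) (fun k => RtoC (y k)) c
  = RtoC ((1 + D_entry d hs gamma c) ^ 1 * y c).
Proof. intros Hc. rewrite scaled_Dn_eq, Madd_diag_id, Mvec_diag by auto. Cplx_ring. Qed.

Lemma Mvec_D_plus_id_sqr d hs gamma n y c : (c < n)%nat ->
  let B := Madd (Mscale (gamma / 2) (Dn d hs)) Mid in
  Mvec n (Mmul n B B) (fun k => RtoC (y k)) c = RtoC ((1 + D_entry d hs gamma c) ^ 2 * y c).
Proof.
  intros Hc B. unfold B. rewrite scaled_Dn_eq, Madd_diag_id.
  transitivity (Mvec n (Mdiag (fun k => Cmul (Cadd (RtoC (D_entry d hs gamma k)) Defs.C1)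
                                             (Cadd (RtoC (D_entry d hs gamma k)) Defs.C1)))
                  (fun k => RtoC (y k)) c).
  - unfold Mvec. apply Csum_ext. intros k _. rewrite Mmul_diag_diag; auto.
  - rewrite Mvec_diag by auto. Cplx_ring.
Qed.

Theorem mainTheorem5 (d : nat) (gamma alpha beta : R)
  (v : (nat -> R) -> Cplx) (vhat : (nat -> Z) -> Cplx)
  (g : (nat -> R) -> Cplx) (ghat : (nat -> Z) -> Cplx) :
  0 < gamma ->
  korobov d alpha vhat -> (forall x, fourier_series_at d vhat x (v x)) ->
  korobov d beta ghat -> (forall x, fourier_series_at d ghat x (g x)) -> 2 <= beta ->
  (5 / 2 < alpha ->
   exists c1 : R, forall (r : nat) (Zm : nat -> nat -> Z) (nn : nat -> nat)
     (hs : nat -> nat -> Z) (y : nat -> R),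
     canonical_lattice d r Zm nn -> min_norm_antialias d r Zm nn hs ->
     let n := npoints r nn in
     let D := Mscale (gamma / 2) (Dn d hs) in
     let W := Mscale (1 / gamma) (Wn r Zm nn v) in
     vnorm n (Mvec n (Mcomm n D W) (fun k => RtoC (y k)))
       <= c1 * vnorm n (Mvec n (Madd D Mid) (fun k => RtoC (y k)))) /\
  (9 / 2 < alpha ->
   exists c2 : R, forall (r : nat) (Zm : nat -> nat -> Z) (nn : nat -> nat)
     (hs : nat -> nat -> Z) (y : nat -> R),
     canonical_lattice d r Zm nn -> min_norm_antialias d r Zm nn hs ->
     let n := npoints r nn in
     let D := Mscale (gamma / 2) (Dn d hs) in
     let W := Mscale (1 / gamma) (Wn r Zm nn v) in
     vnorm n (Mvec n (Mcomm n D (Mcomm n D W)) (fun k => RtoC (y k)))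
       <= c2 * vnorm n (Mvec n (Mmul n (Madd D Mid) (Madd D Mid)) (fun k => RtoC (y k)))).
Proof.
  intros Hg Hk Hfs _ _ _. split; intros Ha.
  - destruct (ad_D_W_bound d gamma alpha v vhat 1 Hg) as [C HC]; auto.
    { unfold decay_exponent. simpl. lra. }
    exists C. intros r Zm nn hs y Hcan Hmin n D W. unfold D, W.
    rewrite (vnorm_ext n _ _ (fun c => Mvec_D_plus_id d hs gamma n y c)).
    exact (HC r Zm nn hs y Hcan Hmin).
  - destruct (ad_D_W_bound d gamma alpha v vhat 2 Hg) as [C HC]; auto.
    { unfold decay_exponent. simpl. lra. }
    exists C. intros r Zm nn hs y Hcan Hmin n D W. unfold D, W.
    rewrite (vnorm_ext n _ _ (fun c => Mvec_D_plus_id_sqr d hs gamma n y c)).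
    exact (HC r Zm nn hs y Hcan Hmin).
Qed.
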